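(* The bilinear form $\omega(X,Y)=\operatorname{tr}_c\big(X[D,Y]\big)$ is a continuous Lie algebra $2$-cocycle on $\mathfrak g$, i.e. it is skew-symmetric and satisfies $\omega(X,[Y,Z])+\omega(Y,[Z,X])+\omega(Z,[X,Y])=0$ for all $X,Y,Z\in\mathfrak g$. It defines a non-trivial central extension of $\mathfrak g$: there is no continuous linear functional $\theta\colon\mathfrak g\to\mathbb C$ with $\omega(X,Y)=\theta([X,Y])$ for all $X,Y\in\mathfrak g$.
   Context: Let $H$ be a complex separable Hilbert space with orthonormal basis $\{e_n\}_{n\in\mathbb Z}$, and let $D$ be the unbounded self-adjoint operator with $De_n=ne_n$. Let $\mathfrak g$ be the real Lie algebra of bounded skew-adjoint operators $X$ on $H$ such that $[D,X]$ is Hilbert--Schmidt. It is a Banach Lie algebra with norm $\|X\|=\sup_n|\langle e_n,Xe_n\rangle|+\|[D,X]\|_2$, where $\|\cdot\|_2$ is the Hilbert--Schmidt norm. The conditional trace is $\operatorname{tr}_c(T)=\sum_{n\in\mathbb Z}\langle e_n,Te_n\rangle$. For $X,Y\in\mathfrak g$ the series defining $\operatorname{tr}_c(X[D,Y])$ converges absolutely. *)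

(* classical reals. Complex numbers are modelled as pairs of reals.
   H = l^2(Z) with basis e_n; an operator is represented by its matrix
   a m n = <e_m, X e_n>. *)
From Stdlib Require Import Reals ZArith ClassicalEpsilon.
Open Scope R_scope.

Definition Cx := (R * R)%type.
Definition C0 : Cx := (0, 0).
Definition Cadd (z w : Cx) : Cx := (fst z + fst w, snd z + snd w).
Definition Copp (z : Cx) : Cx := (- fst z, - snd z).
Definition Csub (z w : Cx) : Cx := Cadd z (Copp w).
Definition Cmul (z w : Cx) : Cx :=
  (fst z * fst w - snd z * snd w, fst z * snd w + snd z * fst w).
Definition Cconj (z : Cx) : Cx := (fst z, - snd z).
Definition Cscal (r : R) (z : Cx) : Cx := (r * fst z, r * snd z).
Definition Cnorm2 (z : Cx) : R := fst z * fst z + snd z * snd z.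
Definition Cabs (z : Cx) : R := sqrt (Cnorm2 z).

(* the limit of a real sequence (meaningful when it converges) *)
Definition lim (u : nat -> R) : R := epsilon (inhabits 0) (fun l => Un_cv u l).
(* least upper bound of a set of reals (meaningful when bounded, nonempty) *)
Definition lub (E : R -> Prop) : R := epsilon (inhabits 0) (fun l => is_lub E l).

(* sum_{k=-N}^{N} f k *)
Definition zsum_range (N : nat) (f : Z -> R) : R :=
  sum_f_R0 (fun i => f (Z.of_nat i - Z.of_nat N)%Z) (2 * N).
Definition csum_range (N : nat) (f : Z -> Cx) : Cx :=
  (zsum_range N (fun k => fst (f k)), zsum_range N (fun k => snd (f k))).
(* sum_{k in Z} f k, as limit of the symmetric partial sums *)
Definition csum (f : Z -> Cx) : Cx :=
  (lim (fun N => zsum_range N (fun k => fst (f k))),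
   lim (fun N => zsum_range N (fun k => snd (f k)))).

Definition mat := Z -> Z -> Cx.
Definition madd (a b : mat) : mat := fun m n => Cadd (a m n) (b m n).
Definition mscal (r : R) (a : mat) : mat := fun m n => Cscal r (a m n).
Definition msub (a b : mat) : mat := fun m n => Csub (a m n) (b m n).
Definition mmul (a b : mat) : mat := fun m n => csum (fun k => Cmul (a m k) (b k n)).
Definition bracket (a b : mat) : mat := msub (mmul a b) (mmul b a).
(* [D, X] with D e_n = n e_n : entries (m - n) a m n *)
Definition commD (a : mat) : mat := fun m n => Cscal (IZR (m - n)) (a m n).

Definition bounded_op (a : mat) : Prop :=
  exists M : R, forall (N K : nat) (v : Z -> Cx),
    zsum_range K (fun m => Cnorm2 (csum_range N (fun n => Cmul (a m n) (v n))))
    <= M * zsum_range N (fun n => Cnorm2 (v n)).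
Definition skew_adjoint (a : mat) : Prop :=
  forall m n, a m n = Copp (Cconj (a n m)).
Definition hs_partial (a : mat) (N : nat) : R :=
  zsum_range N (fun m => zsum_range N (fun n => Cnorm2 (a m n))).
Definition hilbert_schmidt (a : mat) : Prop :=
  exists M : R, forall N : nat, hs_partial a N <= M.

Definition in_g (a : mat) : Prop :=
  bounded_op a /\ skew_adjoint a /\ hilbert_schmidt (commD a).

Definition gnorm (a : mat) : R :=
  lub (fun r => exists n : Z, r = Cabs (a n n))
  + sqrt (lim (hs_partial (commD a))).

Definition tr_c (a : mat) : Cx := csum (fun n => a n n).
Definition omega (a b : mat) : Cx := tr_c (mmul a (commD b)).

From Pilot Require Import Defs.
From Stdlib Require Import Reals ZArith.
From Stdlib Require Import Lia Lra Psatz ClassicalEpsilon FunctionalExtensionality.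
Open Scope R_scope.

(** The series [omega X Y = sum_n sum_k X_nk (k - n) Y_kn] converges absolutely: the diagonal
    of [[D, Y]] vanishes and off the diagonal [|X_nk| <= |(n - k) X_nk|], so AM-GM bounds it by the
    Hilbert-Schmidt norms of [[D, X]] and [[D, Y]].  This gives bilinearity and continuity, and
    Fubini gives skew-symmetry.  Expanding [omega X [Y, Z]] yields absolutely convergent triple
    sums of [(b - a) X_ab Y_bc Z_ca]; after cyclic relabelling the three terms of the cocycle
    identity carry the weights [(b - a) + (c - b) + (a - c) = 0].
    Non-triviality: for [X_p = e_0p - e_p0] and [Y_p = i (e_0p + e_p0)] the bracket
    [[X_p, Y_p] = 2 i (e_00 - e_pp)] has norm [2] for every [p], while [omega X_p Y_p = 2 i p];
    a continuous [theta] with [omega = theta o [.,.]] would be unbounded near [0]. *)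

Fixpoint zsum (N : nat) (f : Z -> R) : R :=
  match N with
  | O => f 0%Z
  | S n => zsum n f + f (Z.of_nat (S n)) + f (- Z.of_nat (S n))%Z
  end.

Lemma zsum_S N f : zsum (S N) f = zsum N f + f (Z.of_nat (S N)) + f (- Z.of_nat (S N))%Z.
Proof. reflexivity. Qed.

Lemma zsum_range_zsum N f : zsum_range N f = zsum N f.
Proof.
  unfold zsum_range; induction N as [|N IH]; [reflexivity|].
  replace (2 * S N)%nat with (S (S (2 * N))) by lia.
  rewrite tech5, decomp_sum by lia; cbn [Nat.pred].
  rewrite (sum_eq (fun i => f (Z.of_nat (S i) - Z.of_nat (S N))%Z)
                  (fun i => f (Z.of_nat i - Z.of_nat N)%Z)), IH, zsum_S
    by (intros; f_equal; lia).
  replace (Z.of_nat (S (S (2 * N))) - Z.of_nat (S N))%Z with (Z.of_nat (S N)) by lia.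
  replace (Z.of_nat 0 - Z.of_nat (S N))%Z with (- Z.of_nat (S N))%Z by lia.
  ring.
Qed.

Lemma zsum_ext_in N f g :
  (forall k, (Z.abs k <= Z.of_nat N)%Z -> f k = g k) -> zsum N f = zsum N g.
Proof.
  induction N as [|N IH]; intros Hfg; simpl.
  - apply Hfg; simpl; lia.
  - rewrite IH by (intros; apply Hfg; lia). rewrite !Hfg by lia. reflexivity.
Qed.

Lemma zsum_ext N f g : (forall k, f k = g k) -> zsum N f = zsum N g.
Proof. intros; apply zsum_ext_in; auto. Qed.

Lemma zsum_plus N f g : zsum N (fun k => f k + g k) = zsum N f + zsum N g.
Proof. induction N; simpl; try rewrite IHN; ring. Qed.

Lemma zsum_scal N c f : zsum N (fun k => c * f k) = c * zsum N f.
Proof. induction N; simpl; try rewrite IHN; ring. Qed.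

Lemma zsum_minus N f g : zsum N (fun k => f k - g k) = zsum N f - zsum N g.
Proof. induction N; simpl; try rewrite IHN; ring. Qed.

Lemma zsum_zero N : zsum N (fun _ => 0) = 0.
Proof. induction N; simpl; try rewrite IHN; ring. Qed.

Lemma zsum_le N f g : (forall k, f k <= g k) -> zsum N f <= zsum N g.
Proof.
  intros Hfg; induction N; [apply Hfg|rewrite !zsum_S].
  pose proof (Hfg (Z.of_nat (S N))); pose proof (Hfg (- Z.of_nat (S N))%Z); lra.
Qed.

Lemma zsum_nonneg N f : (forall k, 0 <= f k) -> 0 <= zsum N f.
Proof. intros. rewrite <- (zsum_zero N). apply zsum_le; auto. Qed.

Lemma zsum_abs N f : Rabs (zsum N f) <= zsum N (fun k => Rabs (f k)).
Proof.
  induction N; [simpl; lra|rewrite !zsum_S].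
  pose proof (Rabs_triang (zsum N f + f (Z.of_nat (S N))) (f (- Z.of_nat (S N))%Z)).
  pose proof (Rabs_triang (zsum N f) (f (Z.of_nat (S N)))); lra.
Qed.

Lemma zsum_mono_S N f : (forall k, 0 <= f k) -> zsum N f <= zsum (S N) f.
Proof.
  intros Hf. rewrite zsum_S. pose proof (Hf (Z.of_nat (S N))); pose proof (Hf (- Z.of_nat (S N))%Z). lra.
Qed.

Lemma zsum_mono N M f : (forall k, 0 <= f k) -> (N <= M)%nat -> zsum N f <= zsum M f.
Proof. intros Hf HNM; induction HNM; [lra|]. eapply Rle_trans; [apply IHHNM|apply zsum_mono_S; auto]. Qed.

Lemma zsum_term_le N f k :
  (forall k, 0 <= f k) -> (Z.abs k <= Z.of_nat N)%Z -> f k <= zsum N f.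
Proof.
  intros Hf; induction N as [|N IH]; intros Hk.
  - simpl. replace k with 0%Z by lia. lra.
  - pose proof (zsum_nonneg N f Hf).
    pose proof (Hf (Z.of_nat (S N))); pose proof (Hf (- Z.of_nat (S N))%Z).
    rewrite zsum_S.
    destruct (Z.eq_dec k (Z.of_nat (S N))) as [->|]; [lra|].
    destruct (Z.eq_dec k (- Z.of_nat (S N))%Z) as [->|]; [lra|].
    specialize (IH ltac:(lia)); lra.
Qed.

Lemma zsum_single N f p :
  (forall k, k <> p -> f k = 0) ->
  zsum N f = if Z_le_dec (Z.abs p) (Z.of_nat N) then f p else 0.
Proof.
  intros Hf; induction N as [|N IH].
  - simpl. destruct (Z_le_dec (Z.abs p) 0); [f_equal; lia|apply Hf; lia].
  - rewrite zsum_S, IH.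
    destruct (Z_le_dec (Z.abs p) (Z.of_nat N)), (Z_le_dec (Z.abs p) (Z.of_nat (S N))); try lia.
    + rewrite (Hf (Z.of_nat (S N))), (Hf (- Z.of_nat (S N))%Z) by lia. ring.
    + destruct (Z.eq_dec p (Z.of_nat (S N))) as [<-|].
      * rewrite (Hf (- p)%Z) by lia. ring.
      * replace p with (- Z.of_nat (S N))%Z by lia. rewrite (Hf (Z.of_nat (S N))) by lia. ring.
    + rewrite (Hf (Z.of_nat (S N))), (Hf (- Z.of_nat (S N))%Z) by lia. ring.
Qed.

Lemma zsum_support1_le N f c :
  (forall k, 0 <= f k) -> (forall k, k <> c -> f k = 0) -> zsum N f <= f c.
Proof. intros Hf Hc. rewrite (zsum_single N f c) by auto. destruct (Z_le_dec _ _); [lra|auto]. Qed.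

Lemma zsum_support2 N f p q :
  p <> q -> (forall k, k <> p -> k <> q -> f k = 0) ->
  zsum N f = (if Z_le_dec (Z.abs p) (Z.of_nat N) then f p else 0)
           + (if Z_le_dec (Z.abs q) (Z.of_nat N) then f q else 0).
Proof.
  intros Hpq Hf.
  rewrite (zsum_ext N f (fun k => (if Z.eq_dec k p then f k else 0) + (if Z.eq_dec k q then f k else 0))).
  - rewrite zsum_plus, (zsum_single N _ p), (zsum_single N (fun k => if Z.eq_dec k q then f k else 0) q).
    + destruct (Z.eq_dec p p), (Z.eq_dec q q); congruence.
    + intros k Hk; destruct (Z.eq_dec k q); congruence.
    + intros k Hk; destruct (Z.eq_dec k p); congruence.
  - intro k. destruct (Z.eq_dec k p), (Z.eq_dec k q); subst; try congruence; try ring. rewrite Hf; auto; ring.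
Qed.

Lemma zsum_support2_le N f p q :
  p <> q -> (forall k, 0 <= f k) -> (forall k, k <> p -> k <> q -> f k = 0) ->
  zsum N f <= f p + f q.
Proof.
  intros Hpq Hf Hs. rewrite (zsum_support2 N f p q) by auto. pose proof (Hf p); pose proof (Hf q).
  destruct (Z_le_dec _ _), (Z_le_dec _ _); lra.
Qed.

Lemma zsum_swap N K (f : Z -> Z -> R) :
  zsum N (fun n => zsum K (fun k => f n k)) = zsum K (fun k => zsum N (fun n => f n k)).
Proof. induction N; [reflexivity|]. rewrite zsum_S, IHN, <- !zsum_plus. reflexivity. Qed.

Lemma lim_eq u l : Un_cv u l -> lim u = l.
Proof.
  intros Hl. unfold lim. apply (UL_sequence u); [|exact Hl].
  apply (epsilon_spec (inhabits 0) (fun l => Un_cv u l)). exists l; exact Hl.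
Qed.

Lemma Un_cv_const c : Un_cv (fun _ => c) c.
Proof. intros e He. exists 0%nat. intros. unfold Rdist. rewrite Rminus_diag, Rabs_R0. auto. Qed.

Lemma Un_cv_le_ub u l M : Un_cv u l -> (forall N, u N <= M) -> l <= M.
Proof. intros Hl HM. apply (Rle_cv_lim (Un := u) (Vn := fun _ => M)); auto using Un_cv_const. Qed.

Lemma Un_cv_ge_lb u l M : Un_cv u l -> (forall N, M <= u N) -> M <= l.
Proof. intros Hl HM. apply (Rle_cv_lim (Un := fun _ => M) (Vn := u)); auto using Un_cv_const. Qed.

Lemma growing_bounded_cv u M :
  (forall N, u N <= u (S N)) -> (forall N, u N <= M) -> exists l, Un_cv u l.
Proof.
  intros Hu HM. destruct (growing_cv u) as [l Hl]; [exact Hu| |exists l; exact Hl].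
  exists M. intros x [n ->]. apply HM.
Qed.

Definition pos_part (x : R) : R := (Rabs x + x) / 2.
Definition neg_part (x : R) : R := (Rabs x - x) / 2.

Lemma pos_part_bounds x : 0 <= pos_part x <= Rabs x.
Proof. unfold pos_part. pose proof (Rle_abs x); pose proof (Rle_abs (- x)). rewrite Rabs_Ropp in *. lra. Qed.

Lemma neg_part_bounds x : 0 <= neg_part x <= Rabs x.
Proof. unfold neg_part. pose proof (Rle_abs x); pose proof (Rle_abs (- x)). rewrite Rabs_Ropp in *. lra. Qed.

Lemma pos_neg_part x : x = pos_part x - neg_part x.
Proof. unfold pos_part, neg_part. field. Qed.

Definition rsum (f : Z -> R) : R := lim (fun N => zsum N f).
Definition summable (f : Z -> R) : Prop :=
  exists M, forall N, zsum N (fun k => Rabs (f k)) <= M.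

Lemma rsum_eq f l : Un_cv (fun N => zsum N f) l -> rsum f = l.
Proof. apply lim_eq. Qed.

Section NonnegSeries.
Variables (f : Z -> R) (M : R).
Hypothesis f_nonneg : forall k, 0 <= f k.
Hypothesis f_bounded : forall N, zsum N f <= M.

Lemma nonneg_summable_cv : Un_cv (fun N => zsum N f) (rsum f).
Proof.
  destruct (growing_bounded_cv (fun N => zsum N f) M) as [l Hl]; auto.
  - intro; apply zsum_mono_S; auto.
  - rewrite (rsum_eq f l Hl). exact Hl.
Qed.

Lemma zsum_le_rsum N : zsum N f <= rsum f.
Proof.
  apply (growing_ineq (fun N => zsum N f)); [intro; apply zsum_mono_S; auto|].
  apply nonneg_summable_cv.
Qed.

Lemma rsum_le_ub : rsum f <= M.
Proof. eapply Un_cv_le_ub; [apply nonneg_summable_cv|auto]. Qed.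

Lemma rsum_nonneg : 0 <= rsum f.
Proof. eapply Un_cv_ge_lb; [apply nonneg_summable_cv|intro; apply zsum_nonneg; auto]. Qed.

End NonnegSeries.

Lemma summable_dominated f g :
  (forall k, Rabs (f k) <= g k) -> (exists M, forall N, zsum N g <= M) -> summable f.
Proof. intros Hfg [M HM]. exists M. intro N. eapply Rle_trans; [|apply HM]. apply zsum_le; auto. Qed.

Lemma summable_compose f h :
  (forall x, Rabs (h x) <= Rabs x) -> summable f -> summable (fun k => h (f k)).
Proof.
  intros Hh [M HM]. exists M. intro N. eapply Rle_trans; [|apply (HM N)]. apply zsum_le; auto.
Qed.

Lemma summable_cv f : summable f -> Un_cv (fun N => zsum N f) (rsum f).
Proof.
  intros [M HM].
  assert (Hpos : forall k, 0 <= pos_part (f k)) by (intro; apply pos_part_bounds).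
  assert (Hneg : forall k, 0 <= neg_part (f k)) by (intro; apply neg_part_bounds).
  assert (Bpos : forall N, zsum N (fun k => pos_part (f k)) <= M).
  { intro N. eapply Rle_trans; [|apply (HM N)]. apply zsum_le; intro; apply pos_part_bounds. }
  assert (Bneg : forall N, zsum N (fun k => neg_part (f k)) <= M).
  { intro N. eapply Rle_trans; [|apply (HM N)]. apply zsum_le; intro; apply neg_part_bounds. }
  assert (Hcv := CV_minus _ _ _ _ (nonneg_summable_cv _ _ Hpos Bpos) (nonneg_summable_cv _ _ Hneg Bneg)).
  assert (Hcv' : Un_cv (fun N => zsum N f)
                   (rsum (fun k => pos_part (f k)) - rsum (fun k => neg_part (f k)))).
  { eapply Un_cv_ext; [|exact Hcv]. intro N; simpl. rewrite <- zsum_minus.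
    apply zsum_ext. intro; symmetry; apply pos_neg_part. }
  rewrite (rsum_eq f _ Hcv'). exact Hcv'.
Qed.

Lemma summable_plus f g : summable f -> summable g -> summable (fun k => f k + g k).
Proof.
  intros [M1 H1] [M2 H2]. apply summable_dominated with (g := fun k => Rabs (f k) + Rabs (g k)).
  - intro; apply Rabs_triang.
  - exists (M1 + M2). intro N. rewrite zsum_plus. specialize (H1 N); specialize (H2 N); lra.
Qed.

Lemma summable_scal c f : summable f -> summable (fun k => c * f k).
Proof.
  intros [M H]. apply summable_dominated with (g := fun k => Rabs c * Rabs (f k)).
  - intro; rewrite Rabs_mult; lra.
  - exists (Rabs c * M). intro N. rewrite zsum_scal. apply Rmult_le_compat_l; auto using Rabs_pos.
Qed.

Lemma summable_opp f : summable f -> summable (fun k => - f k).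
Proof. apply summable_compose. intro; rewrite Rabs_Ropp; lra. Qed.

Lemma summable_abs f : summable f -> summable (fun k => Rabs (f k)).
Proof. apply summable_compose. intro; rewrite Rabs_Rabsolu; lra. Qed.

Lemma rsum_plus f g : summable f -> summable g -> rsum (fun k => f k + g k) = rsum f + rsum g.
Proof.
  intros Hf Hg. apply rsum_eq.
  eapply Un_cv_ext; [|exact (CV_plus _ _ _ _ (summable_cv _ Hf) (summable_cv _ Hg))].
  intro N; simpl. rewrite zsum_plus; reflexivity.
Qed.

Lemma rsum_minus f g : summable f -> summable g -> rsum (fun k => f k - g k) = rsum f - rsum g.
Proof.
  intros Hf Hg. apply rsum_eq.
  eapply Un_cv_ext; [|exact (CV_minus _ _ _ _ (summable_cv _ Hf) (summable_cv _ Hg))].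
  intro N; simpl. rewrite zsum_minus; reflexivity.
Qed.

Lemma rsum_scal c f : summable f -> rsum (fun k => c * f k) = c * rsum f.
Proof.
  intros Hf. apply rsum_eq.
  eapply Un_cv_ext; [|exact (CV_mult _ _ _ _ (Un_cv_const c) (summable_cv _ Hf))].
  intro N; simpl. rewrite zsum_scal; reflexivity.
Qed.

Lemma rsum_opp f : summable f -> rsum (fun k => - f k) = - rsum f.
Proof.
  intros Hf. replace (- rsum f) with (-1 * rsum f) by ring. rewrite <- rsum_scal by auto.
  f_equal. apply functional_extensionality; intro; ring.
Qed.

Lemma rsum_zero : rsum (fun _ => 0) = 0.
Proof.
  apply rsum_eq. eapply Un_cv_ext; [|apply (Un_cv_const 0)]. intro; simpl; rewrite zsum_zero; auto.
Qed.

Lemma rsum_abs f : summable f -> Rabs (rsum f) <= rsum (fun k => Rabs (f k)).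
Proof.
  intros Hf. apply Rabs_le; split.
  - assert (- rsum (fun k => Rabs (f k)) <= rsum f); [|lra].
    eapply Rle_cv_lim; [|exact (CV_opp _ _ (summable_cv _ (summable_abs _ Hf)))|exact (summable_cv _ Hf)].
    intro n; unfold opp_seq. pose proof (zsum_abs n f). pose proof (Rle_abs (- zsum n f)).
    rewrite Rabs_Ropp in *. lra.
  - eapply Rle_cv_lim; [|exact (summable_cv _ Hf)|exact (summable_cv _ (summable_abs _ Hf))].
    intro n. pose proof (zsum_abs n f). pose proof (Rle_abs (zsum n f)). lra.
Qed.

Lemma zsum_cv_termwise N (u : nat -> Z -> R) (l : Z -> R) :
  (forall n, Un_cv (fun K => u K n) (l n)) -> Un_cv (fun K => zsum N (fun n => u K n)) (zsum N l).
Proof.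
  intros Hu; induction N; [apply Hu|].
  rewrite zsum_S. eapply Un_cv_ext; [|apply CV_plus; [apply CV_plus; [apply IHN|apply Hu]|apply Hu]].
  reflexivity.
Qed.

Lemma rsum_single f p : (forall k, k <> p -> f k = 0) -> rsum f = f p.
Proof.
  intros Hf. apply rsum_eq. intros e He. exists (Z.to_nat (Z.abs p)). intros n Hn.
  rewrite (zsum_single n f p Hf). destruct (Z_le_dec _ _); [|lia].
  unfold Rdist. rewrite Rminus_diag, Rabs_R0; auto.
Qed.

(** * Double and triple series *)

Definition zsum2 N (g : Z -> Z -> R) : R := zsum N (fun n => zsum N (fun k => g n k)).
Definition summable2 (f : Z -> Z -> R) : Prop :=
  exists M, forall N, zsum2 N (fun n k => Rabs (f n k)) <= M.

Lemma zsum2_le N f g : (forall n k, f n k <= g n k) -> zsum2 N f <= zsum2 N g.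
Proof. intros; unfold zsum2; apply zsum_le; intro; apply zsum_le; intro; auto. Qed.

Lemma zsum2_nonneg N g : (forall n k, 0 <= g n k) -> 0 <= zsum2 N g.
Proof. intros; unfold zsum2; apply zsum_nonneg; intro; apply zsum_nonneg; auto. Qed.

Lemma zsum2_plus N f g : zsum2 N (fun n k => f n k + g n k) = zsum2 N f + zsum2 N g.
Proof. unfold zsum2. rewrite <- zsum_plus; apply zsum_ext; intro. apply zsum_plus. Qed.

Lemma zsum2_scal N c f : zsum2 N (fun n k => c * f n k) = c * zsum2 N f.
Proof. unfold zsum2. rewrite <- zsum_scal; apply zsum_ext; intro. apply zsum_scal. Qed.

Lemma zsum2_swap N g : zsum2 N (fun k n => g n k) = zsum2 N g.
Proof. unfold zsum2; rewrite zsum_swap; reflexivity. Qed.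

Lemma zsum2_mono g N N' : (forall n k, 0 <= g n k) -> (N <= N')%nat -> zsum2 N g <= zsum2 N' g.
Proof.
  intros Hg HN. unfold zsum2. eapply Rle_trans.
  - apply zsum_le. intro n. apply (zsum_mono N N'); auto.
  - apply zsum_mono; auto. intro; apply zsum_nonneg; auto.
Qed.

Lemma summable2_swap f : summable2 f -> summable2 (fun k n => f n k).
Proof. intros [M H]; exists M; intro N; rewrite zsum2_swap; auto. Qed.

Definition rsum2 (g : Z -> Z -> R) : R := lim (fun N => zsum2 N g).

Section NonnegFubini.
Variables (g : Z -> Z -> R) (M : R).
Hypothesis g_nonneg : forall n k, 0 <= g n k.
Hypothesis g_bounded : forall N, zsum2 N g <= M.

Lemma zsum2_row_le n N : zsum N (g n) <= M.
Proof.
  set (N' := Nat.max N (Z.to_nat (Z.abs n))).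
  eapply Rle_trans; [apply (zsum_mono N N'); auto; lia|].
  eapply Rle_trans; [|apply (g_bounded N')].
  apply (zsum_term_le N' (fun n => zsum N' (fun k => g n k))); [|lia].
  intro; apply zsum_nonneg; auto.
Qed.

Lemma nonneg_row_summable n : summable (g n).
Proof.
  exists M. intro N. eapply Rle_trans; [|apply (zsum2_row_le n N)].
  apply zsum_le; intro; rewrite Rabs_pos_eq; auto; lra.
Qed.

Lemma zsum2_cv_rsum2 : Un_cv (fun N => zsum2 N g) (rsum2 g).
Proof.
  destruct (growing_bounded_cv (fun N => zsum2 N g) M) as [l Hl]; auto.
  - intro; apply zsum2_mono; auto.
  - unfold rsum2; rewrite (lim_eq _ _ Hl); auto.
Qed.

Lemma zsum_rsum_rows_le N : zsum N (fun n => rsum (g n)) <= rsum2 g.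
Proof.
  eapply Un_cv_le_ub.
  { apply (zsum_cv_termwise N (fun K n => zsum K (g n))). intro; apply summable_cv, nonneg_row_summable. }
  intro K; simpl.
  eapply Rle_trans; [|apply (growing_ineq (fun N => zsum2 N g)) with (n := Nat.max N K)].
  - eapply Rle_trans; [apply zsum_le; intro n; apply (zsum_mono K (Nat.max N K)); auto; lia|].
    apply zsum_mono; [intro; apply zsum_nonneg; auto|lia].
  - intro; apply zsum2_mono; auto.
  - apply zsum2_cv_rsum2.
Qed.

Lemma rsum_rows_rsum2 : rsum (fun n => rsum (g n)) = rsum2 g.
Proof.
  assert (Hrows : forall n, 0 <= rsum (g n)).
  { intro n. apply (rsum_nonneg _ M); auto. apply zsum2_row_le. }
  apply Rle_antisym.
  - apply (rsum_le_ub _ (rsum2 g)); auto. apply zsum_rsum_rows_le.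
  - eapply Un_cv_le_ub; [exact zsum2_cv_rsum2|]. intro N.
    eapply Rle_trans; [|apply (zsum_le_rsum _ (rsum2 g)); auto using zsum_rsum_rows_le].
    unfold zsum2. apply zsum_le. intro n. apply (zsum_le_rsum _ M); auto. apply zsum2_row_le.
Qed.

End NonnegFubini.

Lemma summable2_row f n : summable2 f -> summable (f n).
Proof.
  intros [M H]. exists M. intro N. apply (zsum2_row_le (fun n k => Rabs (f n k))); auto.
  intros; apply Rabs_pos.
Qed.

Lemma summable2_rsum_rows f : summable2 f -> summable (fun n => rsum (f n)).
Proof.
  intros [M HM].
  assert (Habs : forall n k, 0 <= Rabs (f n k)) by (intros; apply Rabs_pos).
  apply summable_dominated with (g := fun n => rsum (fun k => Rabs (f n k))).
  - intro n. apply rsum_abs, summable2_row. exists M; exact HM.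
  - exists (rsum2 (fun n k => Rabs (f n k))). apply zsum_rsum_rows_le with (M := M); auto.
Qed.

Lemma rsum2_swap g : rsum2 (fun k n => g n k) = rsum2 g.
Proof. unfold rsum2. f_equal. apply functional_extensionality; intro; apply zsum2_swap. Qed.

Lemma rsum_fubini_nonneg g M :
  (forall n k, 0 <= g n k) -> (forall N, zsum2 N g <= M) ->
  rsum (fun n => rsum (g n)) = rsum (fun k => rsum (fun n => g n k)).
Proof.
  intros Hg HM. rewrite (rsum_rows_rsum2 g M), (rsum_rows_rsum2 (fun k n => g n k) M); auto.
  - symmetry; apply rsum2_swap.
  - intro N; rewrite zsum2_swap; auto.
Qed.

Lemma summable2_compose f h :
  (forall x, Rabs (h x) <= Rabs x) -> summable2 f -> summable2 (fun n k => h (f n k)).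
Proof.
  intros Hh [M HM]. exists M. intro N. eapply Rle_trans; [|apply (HM N)]. apply zsum2_le; auto.
Qed.

Lemma summable2_pos_part f : summable2 f -> summable2 (fun n k => pos_part (f n k)).
Proof. apply summable2_compose. intro x. rewrite (Rabs_pos_eq (pos_part x)); apply pos_part_bounds. Qed.

Lemma summable2_neg_part f : summable2 f -> summable2 (fun n k => neg_part (f n k)).
Proof. apply summable2_compose. intro x. rewrite (Rabs_pos_eq (neg_part x)); apply neg_part_bounds. Qed.

Lemma rsum_rows_pos_neg f :
  summable2 f ->
  rsum (fun n => rsum (f n)) = rsum (fun n => rsum (fun k => pos_part (f n k)))
                             - rsum (fun n => rsum (fun k => neg_part (f n k))).
Proof.
  intros Hf. pose proof (summable2_pos_part f Hf) as Hpos. pose proof (summable2_neg_part f Hf) as Hneg.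
  rewrite <- rsum_minus by (apply summable2_rsum_rows; auto).
  f_equal; apply functional_extensionality; intro n.
  rewrite <- rsum_minus by (apply (summable2_row (fun n k => _ (f n k))); auto).
  f_equal; apply functional_extensionality; intro k. apply pos_neg_part.
Qed.

Lemma rsum_fubini f :
  summable2 f -> rsum (fun n => rsum (f n)) = rsum (fun k => rsum (fun n => f n k)).
Proof.
  intros Hf.
  rewrite (rsum_rows_pos_neg f), (rsum_rows_pos_neg (fun k n => f n k)) by auto using summable2_swap.
  destruct Hf as [M HM].
  assert (Hbound : forall h, (forall x, 0 <= h x <= Rabs x) ->
                     forall N, zsum2 N (fun n k => h (f n k)) <= M).
  { intros h Hh N. eapply Rle_trans; [|apply (HM N)]. apply zsum2_le; intros; apply Hh. }
  rewrite (rsum_fubini_nonneg (fun n k => pos_part (f n k)) M),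
          (rsum_fubini_nonneg (fun n k => neg_part (f n k)) M);
    auto using pos_part_bounds, neg_part_bounds; intros; apply pos_part_bounds || apply neg_part_bounds.
Qed.

Definition zsum3 N (g : Z -> Z -> Z -> R) : R := zsum N (fun a => zsum2 N (g a)).
Definition summable3 (f : Z -> Z -> Z -> R) : Prop :=
  exists M, forall N, zsum3 N (fun a b c => Rabs (f a b c)) <= M.
Definition rsum3 (f : Z -> Z -> Z -> R) : R := rsum (fun a => rsum (fun b => rsum (fun c => f a b c))).

Lemma zsum3_le N f g : (forall a b c, f a b c <= g a b c) -> zsum3 N f <= zsum3 N g.
Proof. intros; unfold zsum3; apply zsum_le; intro; apply zsum2_le; auto. Qed.

Lemma zsum3_plus N f g : zsum3 N (fun a b c => f a b c + g a b c) = zsum3 N f + zsum3 N g.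
Proof. unfold zsum3. rewrite <- zsum_plus; apply zsum_ext; intro. apply zsum2_plus. Qed.

Lemma zsum3_scal N c f : zsum3 N (fun a b d => c * f a b d) = c * zsum3 N f.
Proof. unfold zsum3. rewrite <- zsum_scal; apply zsum_ext; intro. apply zsum2_scal. Qed.

Lemma zsum3_rot N g : zsum3 N (fun a b c => g c a b) = zsum3 N g.
Proof.
  unfold zsum3, zsum2. erewrite zsum_ext; [|intro; apply zsum_swap]. apply zsum_swap.
Qed.

Lemma zsum3_ge_ranges g N1 N2 N3 M :
  (forall a b c, 0 <= g a b c) -> (N1 <= M)%nat -> (N2 <= M)%nat -> (N3 <= M)%nat ->
  zsum N1 (fun a => zsum N2 (fun b => zsum N3 (fun c => g a b c))) <= zsum3 M g.
Proof.
  intros Hg H1 H2 H3. unfold zsum3, zsum2.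
  eapply Rle_trans; [apply zsum_le; intro a; apply zsum_le; intro b; apply (zsum_mono N3 M); auto|].
  eapply Rle_trans; [apply zsum_le; intro a; apply (zsum_mono N2 M); auto; intro; apply zsum_nonneg; auto|].
  apply zsum_mono; auto. intro; apply zsum_nonneg; intro; apply zsum_nonneg; auto.
Qed.

Lemma summable3_dominated f g M :
  (forall a b c, Rabs (f a b c) <= g a b c) -> (forall N, zsum3 N g <= M) -> summable3 f.
Proof. intros Hfg HM. exists M. intro N. eapply Rle_trans; [|apply HM]. apply zsum3_le; auto. Qed.

Lemma summable3_plus f g : summable3 f -> summable3 g -> summable3 (fun a b c => f a b c + g a b c).
Proof.
  intros [M1 H1] [M2 H2].
  apply (summable3_dominated _ (fun a b c => Rabs (f a b c) + Rabs (g a b c)) (M1 + M2)).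
  - intros; apply Rabs_triang.
  - intro N. rewrite zsum3_plus. specialize (H1 N); specialize (H2 N). lra.
Qed.

Lemma summable3_opp f : summable3 f -> summable3 (fun a b c => - f a b c).
Proof.
  intros [M H]. exists M. intro N. eapply Rle_trans; [|apply (H N)].
  apply zsum3_le; intros; rewrite Rabs_Ropp; lra.
Qed.

Lemma summable3_slice f a : summable3 f -> summable2 (f a).
Proof.
  intros [M H]. exists M. intro N. set (N' := Nat.max N (Z.to_nat (Z.abs a))).
  eapply Rle_trans; [apply (zsum2_mono _ N N'); [intros; apply Rabs_pos|lia]|].
  eapply Rle_trans; [|apply (H N')]. unfold zsum3.
  apply (zsum_term_le N' (fun a => zsum2 N' (fun b c => Rabs (f a b c)))); [|lia].
  intro; apply zsum2_nonneg; intros; apply Rabs_pos.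
Qed.

Lemma summable3_rsum_inner f : summable3 f -> summable2 (fun a b => rsum (f a b)).
Proof.
  intros Hf. assert (Hf' := Hf). destruct Hf' as [M HM]. exists M. intro N.
  assert (Hab : forall a b, summable (f a b)) by (intros; apply summable2_row, summable3_slice; auto).
  eapply Rle_trans; [apply zsum2_le; intros a b; apply rsum_abs; auto|].
  eapply Un_cv_le_ub.
  - apply (zsum_cv_termwise N (fun K a => zsum N (fun b => zsum K (fun c => Rabs (f a b c))))).
    intro a. apply zsum_cv_termwise. intro b. apply summable_cv, summable_abs; auto.
  - intro K. simpl. eapply Rle_trans; [|apply (HM (Nat.max N K))].
    apply zsum3_ge_ranges; try lia. intros; apply Rabs_pos.
Qed.

Lemma summable3_swap23 f : summable3 f -> summable3 (fun a b c => f a c b).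
Proof.
  intros [M H]; exists M; intro N. unfold zsum3. erewrite zsum_ext; [apply (H N)|].
  intro a; simpl. rewrite <- zsum2_swap. reflexivity.
Qed.

Lemma summable3_swap12 f : summable3 f -> summable3 (fun a b c => f b a c).
Proof. intros [M H]; exists M; intro N. unfold zsum3, zsum2. rewrite zsum_swap. apply (H N). Qed.

Lemma summable3_rot f : summable3 f -> summable3 (fun a b c => f b c a).
Proof. intros. apply (summable3_swap12 (fun a b c => f a c b)), summable3_swap23; auto. Qed.

Lemma rsum3_swap23 f : summable3 f -> rsum3 (fun a b c => f a c b) = rsum3 f.
Proof.
  intros Hf. unfold rsum3. f_equal. apply functional_extensionality; intro a.
  symmetry. apply rsum_fubini, summable3_slice; auto.
Qed.

Lemma rsum3_swap12 f : summable3 f -> rsum3 (fun a b c => f b a c) = rsum3 f.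
Proof.
  intros Hf. unfold rsum3. symmetry.
  apply (rsum_fubini (fun a b => rsum (f a b))), summable3_rsum_inner; auto.
Qed.

Lemma rsum3_rot f : summable3 f -> rsum3 (fun a b c => f b c a) = rsum3 f.
Proof.
  intros Hf. rewrite (rsum3_swap12 (fun a b c => f a c b)) by (apply summable3_swap23; auto).
  apply rsum3_swap23; auto.
Qed.

Lemma rsum3_plus f g :
  summable3 f -> summable3 g -> rsum3 (fun a b c => f a b c + g a b c) = rsum3 f + rsum3 g.
Proof.
  intros Hf Hg. unfold rsum3.
  pose proof (summable3_rsum_inner f Hf) as If. pose proof (summable3_rsum_inner g Hg) as Ig.
  rewrite <- rsum_plus by (apply (summable2_rsum_rows (fun a b => rsum (_ a b))); auto).
  f_equal. apply functional_extensionality; intro a.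
  rewrite <- rsum_plus by (apply (summable2_row (fun a b => rsum (_ a b))); auto).
  f_equal. apply functional_extensionality; intro b.
  apply rsum_plus; apply summable2_row, summable3_slice; auto.
Qed.

Lemma rsum3_scal c f : summable3 f -> rsum3 (fun a b d => c * f a b d) = c * rsum3 f.
Proof.
  intros Hf. unfold rsum3. pose proof (summable3_rsum_inner f Hf) as If.
  rewrite <- rsum_scal by (apply (summable2_rsum_rows (fun a b => rsum (f a b))); auto).
  f_equal. apply functional_extensionality; intro a.
  rewrite <- rsum_scal by (apply (summable2_row (fun a b => rsum (f a b))); auto).
  f_equal. apply functional_extensionality; intro b.
  apply rsum_scal, summable2_row, summable3_slice; auto.
Qed.

Lemma rsum3_opp f : summable3 f -> rsum3 (fun a b c => - f a b c) = - rsum3 f.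
Proof.
  intros Hf. replace (- rsum3 f) with (-1 * rsum3 f) by ring. rewrite <- rsum3_scal by auto.
  f_equal. repeat (apply functional_extensionality; intro). ring.
Qed.

Lemma rsum3_zero : rsum3 (fun _ _ _ => 0) = 0.
Proof. unfold rsum3. rewrite !rsum_zero. reflexivity. Qed.

Definition Cnorm1 (z : Cx) : R := Rabs (fst z) + Rabs (snd z).

Lemma Cnorm1_pos z : 0 <= Cnorm1 z.
Proof. unfold Cnorm1; pose proof (Rabs_pos (fst z)); pose proof (Rabs_pos (snd z)); lra. Qed.

Lemma Cnorm1_fst z : Rabs (fst z) <= Cnorm1 z.
Proof. unfold Cnorm1; pose proof (Rabs_pos (snd z)); lra. Qed.

Lemma Cnorm1_snd z : Rabs (snd z) <= Cnorm1 z.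
Proof. unfold Cnorm1; pose proof (Rabs_pos (fst z)); lra. Qed.

Lemma Cnorm1_mul z w : Cnorm1 (Cmul z w) <= Cnorm1 z * Cnorm1 w.
Proof.
  destruct z as [a b], w as [c d]; unfold Cnorm1, Cmul; simpl.
  pose proof (Rabs_triang (a * c) (- (b * d))) as Hre. pose proof (Rabs_triang (a * d) (b * c)).
  rewrite Rabs_Ropp in Hre. unfold Rminus. rewrite !Rabs_mult in *.
  pose proof (Rabs_pos a); pose proof (Rabs_pos b); pose proof (Rabs_pos c); pose proof (Rabs_pos d). nra.
Qed.

Lemma Cnorm1_add z w : Cnorm1 (Cadd z w) <= Cnorm1 z + Cnorm1 w.
Proof.
  destruct z as [a b], w as [c d]; unfold Cnorm1, Cadd; simpl.
  pose proof (Rabs_triang a c); pose proof (Rabs_triang b d); lra.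
Qed.

Lemma Cnorm1_sub z w : Cnorm1 (Csub z w) <= Cnorm1 z + Cnorm1 w.
Proof.
  replace (Cnorm1 w) with (Cnorm1 (Copp w)) by (unfold Cnorm1, Copp; simpl; rewrite !Rabs_Ropp; auto).
  apply Cnorm1_add.
Qed.

Lemma Cnorm1_scal r z : Cnorm1 (Cscal r z) = Rabs r * Cnorm1 z.
Proof. unfold Cnorm1, Cscal; simpl. rewrite !Rabs_mult; ring. Qed.

Lemma Cnorm1_sqr_le z : Cnorm1 z * Cnorm1 z <= 2 * Cnorm2 z.
Proof.
  destruct z as [a b]; unfold Cnorm1, Cnorm2; simpl.
  pose proof (Rsqr_abs a); pose proof (Rsqr_abs b); pose proof (Rle_0_sqr (Rabs a - Rabs b)).
  unfold Rsqr in *. nra.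
Qed.

Lemma Cnorm2_pos z : 0 <= Cnorm2 z.
Proof. unfold Cnorm2; nra. Qed.

Lemma Cnorm2_sub_le z w : Cnorm2 (Csub z w) <= 2 * Cnorm2 z + 2 * Cnorm2 w.
Proof.
  destruct z as [a b], w as [c d]; unfold Cnorm2, Csub, Cadd, Copp; simpl.
  pose proof (Rle_0_sqr (a + c)); pose proof (Rle_0_sqr (b + d)). unfold Rsqr in *. nra.
Qed.

Lemma Cnorm2_mul z w : Cnorm2 (Cmul z w) = Cnorm2 z * Cnorm2 w.
Proof. destruct z as [a b], w as [c d]; unfold Cnorm2, Cmul; simpl; ring. Qed.

Lemma Cabs_le_Cnorm1 z : Cabs z <= Cnorm1 z.
Proof.
  unfold Cabs. rewrite <- (sqrt_Rsqr (Cnorm1 z)) by apply Cnorm1_pos.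
  apply sqrt_le_1_alt. destruct z as [a b]; unfold Cnorm1, Cnorm2; simpl.
  pose proof (Rsqr_abs a); pose proof (Rsqr_abs b); pose proof (Rabs_pos a); pose proof (Rabs_pos b).
  unfold Rsqr in *. nra.
Qed.

Lemma Rabs_snd_le_Cabs z : Rabs (snd z) <= Cabs z.
Proof.
  unfold Cabs, Cnorm2. rewrite <- sqrt_Rsqr_abs. apply sqrt_le_1_alt. unfold Rsqr. nra.
Qed.

Lemma csum_rsum f : csum f = (rsum (fun k => fst (f k)), rsum (fun k => snd (f k))).
Proof.
  unfold csum, rsum. f_equal; f_equal; apply functional_extensionality; intro; apply zsum_range_zsum.
Qed.

Lemma fst_csum_rows (F : Z -> Z -> Cx) :
  (fun n => fst (csum (F n))) = (fun n => rsum (fun k => fst (F n k))).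
Proof. apply functional_extensionality; intro; rewrite csum_rsum; reflexivity. Qed.

Lemma snd_csum_rows (F : Z -> Z -> Cx) :
  (fun n => snd (csum (F n))) = (fun n => rsum (fun k => snd (F n k))).
Proof. apply functional_extensionality; intro; rewrite csum_rsum; reflexivity. Qed.

Definition csummable (f : Z -> Cx) : Prop :=
  summable (fun k => fst (f k)) /\ summable (fun k => snd (f k)).

Lemma csummable_dominated f g :
  (forall k, Cnorm1 (f k) <= g k) -> (exists M, forall N, zsum N g <= M) -> csummable f.
Proof.
  intros Hfg HM. split; apply (summable_dominated _ g); auto; intro k; eapply Rle_trans; try apply Hfg.
  - apply Cnorm1_fst.
  - apply Cnorm1_snd.
Qed.

Lemma csummable_opp f : csummable f -> csummable (fun k => Copp (f k)).
Proof. intros []; split; apply summable_opp; auto. Qed.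

Lemma csummable_scal r f : csummable f -> csummable (fun k => Cscal r (f k)).
Proof. intros []; split; apply summable_scal; auto. Qed.

Lemma csum_add f g : csummable f -> csummable g -> csum (fun k => Cadd (f k) (g k)) = Cadd (csum f) (csum g).
Proof. intros [] []. rewrite !csum_rsum. unfold Cadd; simpl. rewrite !rsum_plus; auto. Qed.

Lemma csum_opp f : csummable f -> csum (fun k => Copp (f k)) = Copp (csum f).
Proof. intros []. rewrite !csum_rsum. unfold Copp; simpl. rewrite !rsum_opp; auto. Qed.

Lemma csum_sub f g : csummable f -> csummable g -> csum (fun k => Csub (f k) (g k)) = Csub (csum f) (csum g).
Proof. intros. unfold Csub. rewrite csum_add, csum_opp; auto using csummable_opp. Qed.

Lemma csum_mul c f : csummable f -> csum (fun k => Cmul c (f k)) = Cmul c (csum f).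
Proof.
  intros []. rewrite !csum_rsum. unfold Cmul; simpl.
  rewrite rsum_minus, rsum_plus, !rsum_scal; auto using summable_scal.
Qed.

Lemma csum_scal r f : csummable f -> csum (fun k => Cscal r (f k)) = Cscal r (csum f).
Proof. intros []. rewrite !csum_rsum. unfold Cscal; simpl. rewrite !rsum_scal; auto. Qed.

Lemma csum_single f p : (forall k, k <> p -> f k = C0) -> csum f = f p.
Proof.
  intros Hf. rewrite csum_rsum, (rsum_single _ p), (rsum_single (fun k => snd (f k)) p).
  - destruct (f p); auto.
  - intros k Hk; rewrite Hf; auto.
  - intros k Hk; rewrite Hf; auto.
Qed.

Lemma csum_support2 f p q :
  p <> q -> (forall k, k <> p -> k <> q -> f k = C0) -> csum f = Cadd (f p) (f q).
Proof.
  intros Hpq Hf. rewrite csum_rsum. unfold Cadd.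
  f_equal; apply rsum_eq; intros e He; exists (Z.to_nat (Z.max (Z.abs p) (Z.abs q))); intros n Hn;
    rewrite (zsum_support2 n _ p q Hpq) by (intros k Hp Hq; rewrite Hf; auto);
    destruct (Z_le_dec _ _); try lia; destruct (Z_le_dec _ _); try lia;
    unfold Rdist; rewrite Rminus_diag, Rabs_R0; auto.
Qed.

Definition csummable2 (f : Z -> Z -> Cx) : Prop :=
  summable2 (fun n k => fst (f n k)) /\ summable2 (fun n k => snd (f n k)).

Lemma csummable2_dominated f g M :
  (forall n k, Cnorm1 (f n k) <= g n k) -> (forall N, zsum2 N g <= M) -> csummable2 f.
Proof.
  intros Hfg HM. split; exists M; intro N; eapply Rle_trans; try apply (HM N);
    apply zsum2_le; intros; eapply Rle_trans; try apply Hfg.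
  - apply Cnorm1_fst.
  - apply Cnorm1_snd.
Qed.

Lemma csummable2_row f n : csummable2 f -> csummable (f n).
Proof. intros []; split; apply (summable2_row (fun n k => _ (f n k))); auto. Qed.

Lemma csummable2_csum_rows f : csummable2 f -> csummable (fun n => csum (f n)).
Proof.
  intros []; split; [rewrite fst_csum_rows|rewrite snd_csum_rows];
    apply (summable2_rsum_rows (fun n k => _ (f n k))); auto.
Qed.

Lemma csum_fubini f : csummable2 f -> csum (fun n => csum (f n)) = csum (fun k => csum (fun n => f n k)).
Proof.
  intros []. rewrite !csum_rsum, !fst_csum_rows, !snd_csum_rows.
  rewrite (rsum_fubini (fun n k => fst (f n k))), (rsum_fubini (fun n k => snd (f n k))); auto.
Qed.

Definition csummable3 (f : Z -> Z -> Z -> Cx) : Prop :=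
  summable3 (fun a b c => fst (f a b c)) /\ summable3 (fun a b c => snd (f a b c)).
Definition csum3 (f : Z -> Z -> Z -> Cx) : Cx :=
  (rsum3 (fun a b c => fst (f a b c)), rsum3 (fun a b c => snd (f a b c))).

Lemma csum3_iterated f : csum (fun a => csum (fun b => csum (fun c => f a b c))) = csum3 f.
Proof.
  rewrite csum_rsum, fst_csum_rows, snd_csum_rows. unfold csum3, rsum3.
  f_equal; f_equal; apply functional_extensionality; intro a.
  - rewrite fst_csum_rows; reflexivity.
  - rewrite snd_csum_rows; reflexivity.
Qed.

Lemma csummable3_dominated f g M :
  (forall a b c, Cnorm1 (f a b c) <= g a b c) -> (forall N, zsum3 N g <= M) -> csummable3 f.
Proof.
  intros Hfg HM. split; apply (summable3_dominated _ g M); auto; intros; eapply Rle_trans; try apply Hfg.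
  - apply Cnorm1_fst.
  - apply Cnorm1_snd.
Qed.

Lemma csummable3_csum_inner f : csummable3 f -> csummable2 (fun a b => csum (f a b)).
Proof.
  intros [Hre Him]. split.
  - replace (fun a b => fst (csum (f a b))) with (fun a b => rsum (fun c => fst (f a b c)))
      by (apply functional_extensionality; intro; symmetry; apply fst_csum_rows).
    apply (summable3_rsum_inner (fun a b c => fst (f a b c))); auto.
  - replace (fun a b => snd (csum (f a b))) with (fun a b => rsum (fun c => snd (f a b c)))
      by (apply functional_extensionality; intro; symmetry; apply snd_csum_rows).
    apply (summable3_rsum_inner (fun a b c => snd (f a b c))); auto.
Qed.

Lemma csummable3_rot f : csummable3 f -> csummable3 (fun a b c => f b c a).
Proof. intros []; split; apply (summable3_rot (fun a b c => _ (f a b c))); auto. Qed.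

Lemma csum3_rot f : csummable3 f -> csum3 (fun a b c => f b c a) = csum3 f.
Proof.
  intros []; unfold csum3.
  rewrite (rsum3_rot (fun a b c => fst (f a b c))), (rsum3_rot (fun a b c => snd (f a b c))); auto.
Qed.

Lemma csummable3_add f g :
  csummable3 f -> csummable3 g -> csummable3 (fun a b c => Cadd (f a b c) (g a b c)).
Proof. intros [] []; split; apply summable3_plus; auto. Qed.

Lemma csummable3_opp f : csummable3 f -> csummable3 (fun a b c => Copp (f a b c)).
Proof. intros []; split; apply (summable3_opp (fun a b c => _ (f a b c))); auto. Qed.

Lemma csum3_add f g :
  csummable3 f -> csummable3 g -> csum3 (fun a b c => Cadd (f a b c) (g a b c)) = Cadd (csum3 f) (csum3 g).
Proof. intros [] []; unfold csum3, Cadd; simpl. rewrite !rsum3_plus; auto. Qed.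

Lemma csum3_opp f : csummable3 f -> csum3 (fun a b c => Copp (f a b c)) = Copp (csum3 f).
Proof. intros []; unfold csum3, Copp; simpl. rewrite !rsum3_opp; auto. Qed.

Lemma csum3_zero : csum3 (fun _ _ _ => C0) = C0.
Proof. unfold csum3; simpl. rewrite rsum3_zero. reflexivity. Qed.

Lemma sqr_nonneg x : 0 <= x * x.
Proof. pose proof (Rle_0_sqr x); unfold Rsqr in *; lra. Qed.

Lemma discriminant_le a b c :
  0 <= a -> (forall t, 0 <= a * (t * t) + 2 * b * t + c) -> b * b <= a * c.
Proof.
  intros Ha Hq. destruct (Req_dec a 0) as [->|Ha0].
  - destruct (Req_dec b 0) as [->|Hb]; [lra|].
    specialize (Hq (- (c + 1) / (2 * b))).
    replace (0 * (- (c + 1) / (2 * b) * (- (c + 1) / (2 * b))) + 2 * b * (- (c + 1) / (2 * b)) + c)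
      with (-1) in Hq by (field; auto). lra.
  - specialize (Hq (- b / a)).
    replace (a * (- b / a * (- b / a)) + 2 * b * (- b / a) + c) with (c - b * b / a) in Hq by (field; auto).
    apply (Rmult_le_compat_l a) in Hq; [|lra].
    replace (a * (c - b * b / a)) with (a * c - b * b) in Hq by (field; auto). lra.
Qed.

Lemma zsum_Cauchy_Schwarz N x y :
  zsum N (fun i => x i * y i) * zsum N (fun i => x i * y i)
  <= zsum N (fun i => x i * x i) * zsum N (fun i => y i * y i).
Proof.
  apply discriminant_le; [apply zsum_nonneg; intro; apply sqr_nonneg|]. intro t.
  replace (zsum N (fun i => x i * x i) * (t * t) + 2 * zsum N (fun i => x i * y i) * t
           + zsum N (fun i => y i * y i))
    with (zsum N (fun i => (t * x i + y i) * (t * x i + y i))).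
  - apply zsum_nonneg; intro; apply sqr_nonneg.
  - rewrite (zsum_ext N _ (fun i => (t * t) * (x i * x i) + ((2 * t) * (x i * y i) + y i * y i)))
      by (intro; ring).
    rewrite !zsum_plus, !zsum_scal. ring.
Qed.

Lemma Rmult_le_AM_GM x y t : 0 < t -> x * y <= (t * (x * x) + / t * (y * y)) / 2.
Proof.
  intros Ht. pose proof (sqr_nonneg (t * x - y)) as Hsq.
  replace ((t * x - y) * (t * x - y)) with (t * (t * (x * x) + / t * (y * y) - 2 * (x * y))) in Hsq
    by (field; lra).
  apply Rmult_le_reg_l with t; [lra|]. lra.
Qed.

Lemma zsum2_transpose_product_le N (p q : Z -> Z -> R) t : 0 < t ->
  zsum2 N (fun n k => p n k * q k n)
  <= (t * zsum2 N (fun n k => p n k * p n k) + / t * zsum2 N (fun n k => q n k * q n k)) / 2.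
Proof.
  intros Ht.
  apply Rle_trans with (zsum2 N (fun n k => / 2 * (t * (p n k * p n k) + / t * (q k n * q k n)))).
  - apply zsum2_le; intros n k. pose proof (Rmult_le_AM_GM (p n k) (q k n) t Ht). lra.
  - rewrite zsum2_scal, zsum2_plus, !zsum2_scal, (zsum2_swap N (fun n k => q n k * q n k)).
    lra.
Qed.

Lemma zsum2_separable N (u v : Z -> R) : zsum2 N (fun b c => u b * v c) = zsum N u * zsum N v.
Proof.
  unfold zsum2. rewrite (zsum_ext N _ (fun b => zsum N v * u b)) by (intro; rewrite zsum_scal; ring).
  rewrite zsum_scal; ring.
Qed.

(** The cyclic sum is [sum_(b,c) q_bc v_bc] with [v_bc = sum_a r_ca p_ab]; AM-GM on [q_bc v_bc]
    and Cauchy-Schwarz on [v_bc] give the bound. *)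
Lemma zsum3_cyclic_product_le N (p q r : Z -> Z -> R) :
  zsum3 N (fun a b c => p a b * q b c * r c a)
  <= (zsum2 N (fun n k => q n k * q n k)
      + zsum2 N (fun n k => p n k * p n k) * zsum2 N (fun n k => r n k * r n k)) / 2.
Proof.
  set (v := fun b c => zsum N (fun a => r c a * p a b)).
  set (P := fun b => zsum N (fun a => p a b * p a b)).
  set (R := fun c => zsum N (fun a => r c a * r c a)).
  assert (Hv : zsum3 N (fun a b c => p a b * q b c * r c a) = zsum2 N (fun b c => q b c * v b c)).
  { rewrite <- (zsum3_rot N (fun a b c => p a b * q b c * r c a)). unfold zsum3, zsum2 at 1.
    apply zsum_ext; intro b; apply zsum_ext; intro c.
    unfold v. rewrite <- zsum_scal. apply zsum_ext; intro; ring. }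
  assert (HP : zsum N P = zsum2 N (fun n k => p n k * p n k)) by (unfold P; apply zsum_swap).
  rewrite Hv, <- HP. change (zsum2 N (fun n k => r n k * r n k)) with (zsum N R).
  rewrite <- zsum2_separable.
  apply Rle_trans with (zsum2 N (fun b c => / 2 * (q b c * q b c + P b * R c))).
  - apply zsum2_le; intros b c.
    assert (v b c * v b c <= P b * R c).
    { rewrite (Rmult_comm (P b)). apply zsum_Cauchy_Schwarz. }
    pose proof (sqr_nonneg (q b c - v b c)). lra.
  - rewrite zsum2_scal, zsum2_plus. lra.
Qed.

Definition kron (a b : Z) : R := if Z.eq_dec a b then 1 else 0.

Lemma kron_sym a b : kron a b = kron b a.
Proof. unfold kron; destruct (Z.eq_dec a b), (Z.eq_dec b a); congruence || lra. Qed.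

Lemma kron_nonneg a b : 0 <= kron a b.
Proof. unfold kron; destruct (Z.eq_dec a b); lra. Qed.

Lemma zsum_kron_le N b g : (forall c, 0 <= g c) -> zsum N (fun c => kron b c * g c) <= g b.
Proof.
  intros Hg. replace (g b) with (kron b b * g b) by (unfold kron; destruct (Z.eq_dec b b); [ring|congruence]).
  apply (zsum_support1_le N (fun c => kron b c * g c)).
  - intro; apply Rmult_le_pos; auto using kron_nonneg.
  - intros c Hc. unfold kron. destruct (Z.eq_dec b c); [congruence|ring].
Qed.

Definition dnorm (A : mat) (n k : Z) : R := Cnorm1 (commD A n k).

(** Entries are measured by [Cnorm1], which is within a factor [sqrt 2] of the modulus. *)
Definition hs_le (A : mat) (H : R) : Prop :=
  forall N, zsum2 N (fun n k => dnorm A n k * dnorm A n k) <= H.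
Definition diag_le (A : mat) (D : R) : Prop := forall k, Cnorm1 (A k k) <= D.

Lemma dnorm_eq A n k : dnorm A n k = Rabs (IZR (n - k)) * Cnorm1 (A n k).
Proof. apply Cnorm1_scal. Qed.

Lemma dnorm_pos A n k : 0 <= dnorm A n k.
Proof. apply Cnorm1_pos. Qed.

Lemma dnorm_diag A n : dnorm A n n = 0.
Proof. rewrite dnorm_eq. replace (n - n)%Z with 0%Z by lia. rewrite Rabs_R0; ring. Qed.

Lemma Cnorm1_le_dnorm A n k : n <> k -> Cnorm1 (A n k) <= dnorm A n k.
Proof.
  intros Hnk. rewrite dnorm_eq, Rabs_Zabs.
  assert (1 <= IZR (Z.abs (n - k))) by (apply IZR_le; lia).
  pose proof (Cnorm1_pos (A n k)). nra.
Qed.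

Lemma hs_le_nonneg A H : hs_le A H -> 0 <= H.
Proof.
  intros HA. eapply Rle_trans; [|apply (HA 0%nat)]. apply zsum2_nonneg; intros; apply sqr_nonneg.
Qed.

Lemma diag_le_nonneg A D : diag_le A D -> 0 <= D.
Proof. intros HA. eapply Rle_trans; [apply Cnorm1_pos|apply (HA 0%Z)]. Qed.

Lemma hs_partial_zsum2 A N : hs_partial A N = zsum2 N (fun n k => Cnorm2 (A n k)).
Proof. unfold hs_partial, zsum2. rewrite zsum_range_zsum. apply zsum_ext; intro; apply zsum_range_zsum. Qed.

Definition hs_bounded (A : mat) : Prop := exists H, hs_le A H.

Lemma hilbert_schmidt_hs_bounded A : hilbert_schmidt (commD A) -> hs_bounded A.
Proof.
  intros [M HM]. exists (2 * M). intro N.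
  eapply Rle_trans; [apply zsum2_le; intros n k; apply Cnorm1_sqr_le|].
  rewrite zsum2_scal, <- hs_partial_zsum2. specialize (HM N). lra.
Qed.

Definition basis_vec (k : Z) : Z -> Cx := fun n => if Z.eq_dec n k then (1, 0) else C0.

Lemma csum_range_basis_vec (A : mat) m k N :
  (Z.abs k <= Z.of_nat N)%Z -> csum_range N (fun n => Cmul (A m n) (basis_vec k n)) = A m k.
Proof.
  intros Hk. unfold csum_range. rewrite !zsum_range_zsum.
  rewrite (zsum_single N _ k), (zsum_single N (fun j => snd (Cmul (A m j) (basis_vec k j))) k).
  - destruct (Z_le_dec _ _); [|lia]. unfold basis_vec, Cmul. destruct (Z.eq_dec k k); [|congruence].
    simpl. destruct (A m k); simpl; f_equal; ring.
  - intros j Hj; unfold basis_vec, Cmul; destruct (Z.eq_dec j k); [congruence|]; simpl; ring.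
  - intros j Hj; unfold basis_vec, Cmul; destruct (Z.eq_dec j k); [congruence|]; simpl; ring.
Qed.

Lemma zsum_Cnorm2_basis_vec k N :
  (Z.abs k <= Z.of_nat N)%Z -> zsum N (fun n => Cnorm2 (basis_vec k n)) = 1.
Proof.
  intros Hk. rewrite (zsum_single N _ k).
  - destruct (Z_le_dec _ _); [|lia]. unfold basis_vec; destruct (Z.eq_dec k k); [|congruence].
    unfold Cnorm2; simpl; ring.
  - intros j Hj; unfold basis_vec; destruct (Z.eq_dec j k); [congruence|]. unfold Cnorm2, C0; simpl; ring.
Qed.

(** Testing the operator bound on the basis vector [e_k] bounds the diagonal entry [A k k]. *)
Lemma bounded_op_diag_le A : bounded_op A -> exists D, diag_le A D.
Proof.
  intros [M HM]. exists (1 + 2 * Rabs M). intro k.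
  set (N := Z.to_nat (Z.abs k)). assert (Hk : (Z.abs k <= Z.of_nat N)%Z) by lia.
  specialize (HM N N (basis_vec k)).
  rewrite !zsum_range_zsum, zsum_Cnorm2_basis_vec, Rmult_1_r in HM by exact Hk.
  assert (Hkk : Cnorm2 (A k k) <= M).
  { eapply Rle_trans; [|exact HM]. rewrite <- (csum_range_basis_vec A k k N Hk).
    apply (zsum_term_le N (fun m => Cnorm2 (csum_range N (fun n => Cmul (A m n) (basis_vec k n))))); auto.
    intro; apply Cnorm2_pos. }
  pose proof (Cnorm1_sqr_le (A k k)). pose proof (Cnorm1_pos (A k k)). pose proof (Rle_abs M).
  destruct (Rle_dec (Cnorm1 (A k k)) 1); nra.
Qed.

Lemma in_g_hs_bounded A : in_g A -> hs_bounded A.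
Proof. intros (_ & _ & HA). apply hilbert_schmidt_hs_bounded; auto. Qed.

Lemma in_g_diag_le A : in_g A -> exists D, diag_le A D.
Proof. intros (HA & _ & _). apply bounded_op_diag_le; auto. Qed.

Lemma Cnorm1_entry_le A D n k : diag_le A D -> Cnorm1 (A n k) <= kron n k * D + dnorm A n k.
Proof.
  intros HD. unfold kron. destruct (Z.eq_dec n k) as [<-|Hnk].
  - pose proof (dnorm_pos A n n). specialize (HD n). lra.
  - pose proof (Cnorm1_le_dnorm A n k Hnk). lra.
Qed.


(** * Bilinearity and skew-symmetry of [omega] *)

Lemma Cnorm1_csum_le f g M :
  csummable f -> (forall k, Cnorm1 (f k) <= g k) -> (forall k, 0 <= g k) ->
  (forall N, zsum N g <= M) -> Cnorm1 (csum f) <= rsum g.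
Proof.
  intros [Hre Him] Hfg Hg HM. rewrite csum_rsum. unfold Cnorm1; simpl.
  eapply Rle_trans; [apply Rplus_le_compat; apply rsum_abs; auto|].
  rewrite <- rsum_plus by (apply summable_abs; auto).
  eapply Rle_cv_lim;
    [|apply summable_cv, summable_plus; apply summable_abs; auto|apply (nonneg_summable_cv _ M); auto].
  intro N. apply zsum_le. apply Hfg.
Qed.

Lemma Cnorm1_csum2_le F g M :
  csummable2 F -> (forall n k, Cnorm1 (F n k) <= g n k) -> (forall n k, 0 <= g n k) ->
  (forall N, zsum2 N g <= M) -> Cnorm1 (csum (fun n => csum (F n))) <= M.
Proof.
  intros HF HFg Hg HM.
  assert (Hrows : forall n, 0 <= rsum (g n)).
  { intro n. apply (rsum_nonneg _ M); auto. apply zsum2_row_le; auto. }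
  eapply Rle_trans; [apply (Cnorm1_csum_le _ (fun n => rsum (g n)) (rsum2 g))|].
  - apply csummable2_csum_rows; auto.
  - intro n. apply (Cnorm1_csum_le _ _ M); auto using csummable2_row, zsum2_row_le.
  - exact Hrows.
  - apply (zsum_rsum_rows_le g M); auto.
  - rewrite (rsum_rows_rsum2 g M) by auto. eapply Un_cv_le_ub; [apply (zsum2_cv_rsum2 g M)|]; auto.
Qed.

Definition omega_term (X Y : mat) (n k : Z) : Cx := Cmul (X n k) (commD Y k n).

Lemma omega_eq X Y : omega X Y = csum (fun n => csum (omega_term X Y n)).
Proof. reflexivity. Qed.

(** The diagonal of [[D, Y]] vanishes, so off-diagonal entries of [X] suffice: they are bounded by
    those of [[D, X]]. *)
Lemma Cnorm1_omega_term_le X Y n k : Cnorm1 (omega_term X Y n k) <= dnorm X n k * dnorm Y k n.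
Proof.
  unfold omega_term. eapply Rle_trans; [apply Cnorm1_mul|]. fold (dnorm Y k n).
  destruct (Z.eq_dec n k) as [<-|Hnk].
  - rewrite !dnorm_diag. lra.
  - apply Rmult_le_compat_r; [apply dnorm_pos|apply Cnorm1_le_dnorm; auto].
Qed.

Lemma zsum2_dnorm_transpose_le X Y a b t N :
  0 < t -> hs_le X a -> hs_le Y b ->
  zsum2 N (fun n k => dnorm X n k * dnorm Y k n) <= (t * a + / t * b) / 2.
Proof.
  intros Ht Ha Hb. eapply Rle_trans; [apply (zsum2_transpose_product_le N _ _ t Ht)|].
  pose proof (Ha N); pose proof (Hb N). pose proof (Rinv_0_lt_compat t Ht).
  apply Rmult_le_compat_r; [lra|]. apply Rplus_le_compat; apply Rmult_le_compat_l; lra.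
Qed.

Lemma omega_term_summable X Y : hs_bounded X -> hs_bounded Y -> csummable2 (omega_term X Y).
Proof.
  intros [a Ha] [b Hb].
  apply (csummable2_dominated _ (fun n k => dnorm X n k * dnorm Y k n) ((1 * a + / 1 * b) / 2)).
  - apply Cnorm1_omega_term_le.
  - intro N. apply zsum2_dnorm_transpose_le; auto; lra.
Qed.

Lemma Cnorm1_omega_le X Y a b t :
  0 < t -> hs_le X a -> hs_le Y b -> Cnorm1 (omega X Y) <= (t * a + / t * b) / 2.
Proof.
  intros Ht Ha Hb. rewrite omega_eq.
  apply (Cnorm1_csum2_le _ (fun n k => dnorm X n k * dnorm Y k n)).
  - apply omega_term_summable; [exists a|exists b]; auto.
  - apply Cnorm1_omega_term_le.
  - intros; apply Rmult_le_pos; apply dnorm_pos.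
  - intro N. apply zsum2_dnorm_transpose_le; auto.
Qed.

Lemma csum2_lin F G a b :
  csummable2 F -> csummable2 G ->
  csum (fun n => csum (fun k => Cadd (Cscal a (F n k)) (Cscal b (G n k))))
  = Cadd (Cscal a (csum (fun n => csum (F n)))) (Cscal b (csum (fun n => csum (G n)))).
Proof.
  intros HF HG.
  replace (fun n => csum (fun k => Cadd (Cscal a (F n k)) (Cscal b (G n k))))
    with (fun n => Cadd (Cscal a (csum (F n))) (Cscal b (csum (G n)))).
  - rewrite csum_add, !csum_scal; auto using csummable_scal, csummable2_csum_rows.
  - apply functional_extensionality; intro n.
    rewrite csum_add, !csum_scal; auto using csummable_scal, csummable2_row.
Qed.

Lemma csum2_opp F :
  csummable2 F -> csum (fun n => csum (fun k => Copp (F n k))) = Copp (csum (fun n => csum (F n))).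
Proof.
  intros HF. replace (fun n => csum (fun k => Copp (F n k))) with (fun n => Copp (csum (F n))).
  - apply csum_opp, csummable2_csum_rows; auto.
  - apply functional_extensionality; intro n. rewrite csum_opp; auto using csummable2_row.
Qed.

Lemma omega_linear_l X Y Z a b :
  hs_bounded X -> hs_bounded Y -> hs_bounded Z ->
  omega (madd (mscal a X) (mscal b Y)) Z = Cadd (Cscal a (omega X Z)) (Cscal b (omega Y Z)).
Proof.
  intros HX HY HZ. rewrite !omega_eq, <- csum2_lin by (apply omega_term_summable; auto).
  f_equal; apply functional_extensionality; intro n; f_equal; apply functional_extensionality; intro k.
  unfold omega_term, madd, mscal, Cmul, Cadd, Cscal; simpl. f_equal; ring.
Qed.

Lemma omega_linear_r X Y Z a b :
  hs_bounded X -> hs_bounded Y -> hs_bounded Z ->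
  omega X (madd (mscal a Y) (mscal b Z)) = Cadd (Cscal a (omega X Y)) (Cscal b (omega X Z)).
Proof.
  intros HX HY HZ. rewrite !omega_eq, <- csum2_lin by (apply omega_term_summable; auto).
  f_equal; apply functional_extensionality; intro n; f_equal; apply functional_extensionality; intro k.
  unfold omega_term, commD, madd, mscal, Cmul, Cadd, Cscal; simpl. f_equal; ring.
Qed.

Lemma omega_skew X Y : hs_bounded X -> hs_bounded Y -> omega X Y = Copp (omega Y X).
Proof.
  intros HX HY. rewrite !omega_eq, (csum_fubini (omega_term Y X)) by (apply omega_term_summable; auto).
  replace (fun k => csum (fun n => omega_term Y X n k))
    with (fun k => csum (fun n => Copp (omega_term X Y k n))).
  - rewrite csum2_opp by (apply omega_term_summable; auto).
    destruct (csum _); unfold Copp; simpl; f_equal; ring.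
  - apply functional_extensionality; intro k; f_equal; apply functional_extensionality; intro n.
    unfold omega_term, commD, Cmul, Copp, Cscal; simpl. rewrite !minus_IZR. f_equal; ring.
Qed.

(** * The cocycle identity *)

Lemma Cnorm1_entry_sqr_le A D n k :
  diag_le A D ->
  Cnorm1 (A n k) * Cnorm1 (A n k) <= 2 * (kron n k * (D * D)) + 2 * (dnorm A n k * dnorm A n k).
Proof.
  intros HD. pose proof (Cnorm1_entry_le A D n k HD) as Hnk. pose proof (Cnorm1_pos (A n k)).
  pose proof (sqr_nonneg (kron n k * D - dnorm A n k)).
  assert (kron n k * kron n k = kron n k) by (unfold kron; destruct (Z.eq_dec n k); ring).
  assert (Cnorm1 (A n k) * Cnorm1 (A n k)
          <= (kron n k * D + dnorm A n k) * (kron n k * D + dnorm A n k)) by (apply Rmult_le_compat; lra).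
  nra.
Qed.

Lemma zsum_row_sqr_le A D H k N :
  diag_le A D -> hs_le A H -> zsum N (fun j => Cnorm1 (A k j) * Cnorm1 (A k j)) <= 2 * (D * D) + 2 * H.
Proof.
  intros HD HH. eapply Rle_trans; [apply zsum_le; intro j; apply (Cnorm1_entry_sqr_le A D k j HD)|].
  rewrite zsum_plus, !zsum_scal.
  pose proof (zsum_kron_le N k (fun _ => D * D) (fun _ => sqr_nonneg D)).
  pose proof (zsum2_row_le (fun n k => dnorm A n k * dnorm A n k) H (fun _ _ => sqr_nonneg _) HH k N).
  simpl in *. lra.
Qed.

Lemma zsum_col_sqr_le A D H n N :
  diag_le A D -> hs_le A H -> zsum N (fun j => Cnorm1 (A j n) * Cnorm1 (A j n)) <= 2 * (D * D) + 2 * H.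
Proof.
  intros HD HH. eapply Rle_trans; [apply zsum_le; intro j; apply (Cnorm1_entry_sqr_le A D j n HD)|].
  rewrite zsum_plus, !zsum_scal, (zsum_ext N (fun j => kron j n * _) (fun j => kron n j * (D * D)))
    by (intro; rewrite kron_sym; reflexivity).
  pose proof (zsum_kron_le N n (fun _ => D * D) (fun _ => sqr_nonneg D)).
  assert (HHt : forall N, zsum2 N (fun k n => dnorm A n k * dnorm A n k) <= H)
    by (intro; rewrite zsum2_swap; apply HH).
  pose proof (zsum2_row_le (fun k n => dnorm A n k * dnorm A n k) H (fun _ _ => sqr_nonneg _) HHt n N).
  simpl in *. lra.
Qed.

Lemma mmul_term_summable B C k n :
  in_g B -> in_g C -> csummable (fun j => Cmul (B k j) (C j n)).
Proof.
  intros HB HC.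
  destruct (in_g_diag_le B HB) as [DB HDB], (in_g_hs_bounded B HB) as [HsB HHB].
  destruct (in_g_diag_le C HC) as [DC HDC], (in_g_hs_bounded C HC) as [HsC HHC].
  apply (csummable_dominated _
           (fun j => / 2 * (Cnorm1 (B k j) * Cnorm1 (B k j) + Cnorm1 (C j n) * Cnorm1 (C j n)))).
  - intro j. eapply Rle_trans; [apply Cnorm1_mul|].
    pose proof (sqr_nonneg (Cnorm1 (B k j) - Cnorm1 (C j n))). lra.
  - exists (/ 2 * ((2 * (DB * DB) + 2 * HsB) + (2 * (DC * DC) + 2 * HsC))). intro N.
    rewrite zsum_scal, zsum_plus. apply Rmult_le_compat_l; [lra|].
    apply Rplus_le_compat; [apply zsum_row_sqr_le|apply zsum_col_sqr_le]; auto.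
Qed.

Definition cyclic_term (A B C : mat) (a b c : Z) : Cx :=
  Cmul (Cscal (IZR (b - a)) (A a b)) (Cmul (B b c) (C c a)).

(** Split [B b c] and [C c a] into diagonal and off-diagonal parts: the diagonal-diagonal
    product only survives for [a = b = c], where the factor [b - a] kills it. *)
Lemma Cnorm1_cyclic_term_le A B C DB DC a b c :
  diag_le B DB -> diag_le C DC ->
  Cnorm1 (cyclic_term A B C a b c)
  <= DB * (kron b c * (dnorm A a b * dnorm C c a)) + DC * (kron a c * (dnorm A a b * dnorm B b c))
     + dnorm A a b * dnorm B b c * dnorm C c a.
Proof.
  intros HB HC. unfold cyclic_term.
  eapply Rle_trans; [apply Cnorm1_mul|].
  assert (Hab : Cnorm1 (Cscal (IZR (b - a)) (A a b)) = dnorm A a b).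
  { rewrite Cnorm1_scal, dnorm_eq, <- Rabs_Ropp, <- opp_IZR. do 3 f_equal. lia. }
  rewrite Hab.
  pose proof (Cnorm1_entry_le B DB b c HB). pose proof (Cnorm1_entry_le C DC c a HC).
  pose proof (diag_le_nonneg B DB HB). pose proof (diag_le_nonneg C DC HC).
  pose proof (dnorm_pos A a b); pose proof (dnorm_pos B b c); pose proof (dnorm_pos C c a).
  pose proof (kron_nonneg b c); pose proof (kron_nonneg c a).
  assert (Hdiag : dnorm A a b * kron b c * kron c a = 0).
  { unfold kron. destruct (Z.eq_dec b c), (Z.eq_dec c a); try ring. subst. rewrite dnorm_diag; ring. }
  rewrite (kron_sym a c).
  apply Rle_trans with (dnorm A a b * ((kron b c * DB + dnorm B b c) * (kron c a * DC + dnorm C c a))).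
  - apply Rmult_le_compat_l; [lra|]. eapply Rle_trans; [apply Cnorm1_mul|].
    apply Rmult_le_compat; auto using Cnorm1_pos.
  - right. transitivity (DB * (kron b c * (dnorm A a b * dnorm C c a))
      + DC * (kron c a * (dnorm A a b * dnorm B b c)) + dnorm A a b * dnorm B b c * dnorm C c a
      + DB * DC * (dnorm A a b * kron b c * kron c a)); [ring|rewrite Hdiag; ring].
Qed.

Lemma zsum3_kron_le N (g : Z -> Z -> Z -> R) (s : Z -> Z -> Z) :
  (forall a b c, 0 <= g a b c) ->
  zsum3 N (fun a b c => kron (s a b) c * g a b c) <= zsum2 N (fun a b => g a b (s a b)).
Proof.
  intros Hg. unfold zsum3, zsum2. apply zsum_le; intro a; apply zsum_le; intro b.
  apply (zsum_kron_le N (s a b) (g a b)); auto.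
Qed.

Lemma cyclic_term_summable A B C : in_g A -> in_g B -> in_g C -> csummable3 (cyclic_term A B C).
Proof.
  intros HA HB HC.
  destruct (in_g_hs_bounded A HA) as [HsA HHA], (in_g_hs_bounded B HB) as [HsB HHB],
    (in_g_hs_bounded C HC) as [HsC HHC].
  destruct (in_g_diag_le B HB) as [DB HDB], (in_g_diag_le C HC) as [DC HDC].
  pose proof (diag_le_nonneg B DB HDB). pose proof (diag_le_nonneg C DC HDC).
  apply (csummable3_dominated _
           (fun a b c => DB * (kron b c * (dnorm A a b * dnorm C c a))
                         + DC * (kron a c * (dnorm A a b * dnorm B b c))
                         + dnorm A a b * dnorm B b c * dnorm C c a)
           (DB * ((1 * HsA + / 1 * HsC) / 2) + DC * ((1 * HsA + / 1 * HsB) / 2) + (HsB + HsA * HsC) / 2)).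
  { intros a b c. apply Cnorm1_cyclic_term_le; auto. }
  intro N. rewrite !zsum3_plus, !zsum3_scal.
  assert (HAC := zsum2_dnorm_transpose_le A C HsA HsC 1 N Rlt_0_1 HHA HHC).
  assert (HAB := zsum2_dnorm_transpose_le A B HsA HsB 1 N Rlt_0_1 HHA HHB).
  assert (K1 := zsum3_kron_le N (fun a b c => dnorm A a b * dnorm C c a) (fun a b => b)).
  assert (K2 := zsum3_kron_le N (fun a b c => dnorm A a b * dnorm B b c) (fun a b => a)).
  assert (Hcyc := zsum3_cyclic_product_le N (dnorm A) (dnorm B) (dnorm C)).
  assert (Hprod : zsum2 N (fun n k => dnorm A n k * dnorm A n k)
                  * zsum2 N (fun n k => dnorm C n k * dnorm C n k)
                  <= HsA * HsC).
  { apply Rmult_le_compat; auto; apply zsum2_nonneg; intros; apply sqr_nonneg. }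
  cbv beta in *. pose proof (HHB N).
  specialize (K1 ltac:(intros; apply Rmult_le_pos; apply dnorm_pos)).
  specialize (K2 ltac:(intros; apply Rmult_le_pos; apply dnorm_pos)).
  apply Rplus_le_compat; [apply Rplus_le_compat|]; try (apply Rmult_le_compat_l; auto; lra); lra.
Qed.

Lemma csum2_sub F G :
  csummable2 F -> csummable2 G ->
  csum (fun n => csum (fun k => Csub (F n k) (G n k)))
  = Csub (csum (fun n => csum (F n))) (csum (fun n => csum (G n))).
Proof.
  intros HF HG. replace (fun n => csum (fun k => Csub (F n k) (G n k)))
    with (fun n => Csub (csum (F n)) (csum (G n))).
  - apply csum_sub; apply csummable2_csum_rows; auto.
  - apply functional_extensionality; intro n. rewrite csum_sub; auto using csummable2_row.
Qed.

Lemma omega_bracket_csum3 X Y Z :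
  in_g X -> in_g Y -> in_g Z ->
  omega X (bracket Y Z) = Csub (csum3 (cyclic_term X Y Z)) (csum3 (cyclic_term X Z Y)).
Proof.
  intros HX HY HZ. rewrite omega_eq, <- !csum3_iterated.
  rewrite <- csum2_sub by (apply csummable3_csum_inner, cyclic_term_summable; auto).
  f_equal; apply functional_extensionality; intro n; f_equal; apply functional_extensionality; intro k.
  unfold omega_term, commD, bracket, msub, mmul, cyclic_term.
  rewrite !csum_mul by (apply mmul_term_summable; auto).
  destruct (X n k), (csum (fun j => Cmul (Y k j) (Z j n))), (csum (fun j => Cmul (Z k j) (Y j n))).
  unfold Cmul, Cscal, Csub, Cadd, Copp; simpl; f_equal; ring.
Qed.

Lemma csum3_rot2 f : csummable3 f -> csum3 (fun a b c => f c a b) = csum3 f.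
Proof.
  intros Hf. rewrite <- (csum3_rot (fun a b c => f c a b)) by (apply csummable3_rot, csummable3_rot; auto).
  reflexivity.
Qed.

(** After relabelling, the six triple sums combine into the single summand
    [((b - a) + (c - b) + (a - c)) X_ab Y_bc Z_ca - (same with Y, Z swapped) = 0]. *)
Lemma omega_cocycle X Y Z :
  in_g X -> in_g Y -> in_g Z ->
  Cadd (Cadd (omega X (bracket Y Z)) (omega Y (bracket Z X))) (omega Z (bracket X Y)) = C0.
Proof.
  intros HX HY HZ. rewrite !omega_bracket_csum3 by auto.
  pose proof (cyclic_term_summable X Y Z HX HY HZ) as A1.
  pose proof (cyclic_term_summable X Z Y HX HZ HY) as A2.
  pose proof (cyclic_term_summable Y Z X HY HZ HX) as A3.
  pose proof (cyclic_term_summable Y X Z HY HX HZ) as A4.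
  pose proof (cyclic_term_summable Z X Y HZ HX HY) as A5.
  pose proof (cyclic_term_summable Z Y X HZ HY HX) as A6.
  rewrite <- (csum3_rot (cyclic_term Y Z X)), <- (csum3_rot2 (cyclic_term Z X Y)),
    <- (csum3_rot2 (cyclic_term Y X Z)), <- (csum3_rot (cyclic_term Z Y X)) by auto.
  pose proof (csummable3_rot _ A3) as B3. pose proof (csummable3_rot _ (csummable3_rot _ A5)) as B5.
  pose proof (csummable3_rot _ (csummable3_rot _ A4)) as B4. pose proof (csummable3_rot _ A6) as B6.
  unfold Csub. rewrite <- !csum3_opp by auto.
  rewrite <- !csum3_add by (repeat apply csummable3_add; try apply csummable3_opp; auto).
  rewrite <- csum3_zero. f_equal.
  repeat (apply functional_extensionality; intro).
  unfold cyclic_term, Cmul, Cscal, Cadd, Copp, C0; simpl. rewrite !minus_IZR. f_equal; ring.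
Qed.

(** * Continuity *)

Lemma lub_ge (S : R -> Prop) x : bound S -> S x -> x <= Defs.lub S.
Proof.
  intros Hb Hx. destruct (completeness S Hb (ex_intro _ x Hx)) as [m Hm].
  apply (epsilon_spec (inhabits 0) (fun l => is_lub S l)); [exists m; auto|exact Hx].
Qed.

Lemma lub_le (S : R -> Prop) M : (exists x, S x) -> (forall x, S x -> x <= M) -> Defs.lub S <= M.
Proof.
  intros [x Hx] HM. assert (Hb : bound S) by (exists M; exact HM).
  destruct (completeness S Hb (ex_intro _ x Hx)) as [m Hm].
  apply (epsilon_spec (inhabits 0) (fun l => is_lub S l)); [exists m; auto|exact HM].
Qed.

Lemma hs_partial_cv A :
  hilbert_schmidt A -> Un_cv (hs_partial A) (lim (hs_partial A)).
Proof.
  intros [M HM]. destruct (growing_bounded_cv (hs_partial A) M) as [l Hl]; auto.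
  - intro N. rewrite !hs_partial_zsum2. apply zsum2_mono; [intros; apply Cnorm2_pos|lia].
  - rewrite (lim_eq _ _ Hl). exact Hl.
Qed.

(** The sup of the diagonal is nonnegative, so [gnorm A < d] puts the Hilbert-Schmidt norm of
    [[D, A]] below [d]. *)
Lemma gnorm_lt_hs_le A D d :
  diag_le A D -> hilbert_schmidt (commD A) -> gnorm A < d -> hs_le A (2 * (d * d)).
Proof.
  intros HD HH Hg N. unfold gnorm in Hg.
  assert (Hdiag : 0 <= Defs.lub (fun r => exists n, r = Cabs (A n n))).
  { eapply Rle_trans; [|apply lub_ge; [|exists 0%Z; reflexivity]]; [apply sqrt_pos|].
    exists D. intros r [n ->]. eapply Rle_trans; [apply Cabs_le_Cnorm1|apply HD]. }
  set (L := lim (hs_partial (commD A))) in Hg.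
  assert (HL := hs_partial_cv _ HH). fold L in HL.
  assert (HN : hs_partial (commD A) N <= L).
  { apply (growing_ineq (hs_partial (commD A))); auto.
    intro N'. rewrite !hs_partial_zsum2. apply zsum2_mono; [intros; apply Cnorm2_pos|lia]. }
  assert (HL0 : 0 <= L).
  { eapply Rle_trans; [|exact HN]. rewrite hs_partial_zsum2. apply zsum2_nonneg; intros; apply Cnorm2_pos. }
  assert (HLd : L < d * d).
  { rewrite <- (sqrt_sqrt L HL0). pose proof (sqrt_pos L). nra. }
  eapply Rle_trans; [apply zsum2_le; intros; apply Cnorm1_sqr_le|].
  rewrite zsum2_scal, <- hs_partial_zsum2. lra.
Qed.

Lemma msub_diag_le X Y DX DY : diag_le X DX -> diag_le Y DY -> diag_le (msub X Y) (DX + DY).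
Proof.
  intros HX HY k. eapply Rle_trans; [apply Cnorm1_sub|]. pose proof (HX k); pose proof (HY k). lra.
Qed.

Lemma commD_msub X Y n k : commD (msub X Y) n k = Csub (commD X n k) (commD Y n k).
Proof. unfold commD, msub, Csub, Cadd, Copp, Cscal; simpl; f_equal; ring. Qed.

Lemma msub_hilbert_schmidt X Y :
  hilbert_schmidt (commD X) -> hilbert_schmidt (commD Y) -> hilbert_schmidt (commD (msub X Y)).
Proof.
  intros [MX HX] [MY HY]. exists (2 * MX + 2 * MY). intro N.
  specialize (HX N); specialize (HY N). rewrite !hs_partial_zsum2 in *.
  eapply Rle_trans.
  - apply (zsum2_le N _ (fun n k => 2 * Cnorm2 (commD X n k) + 2 * Cnorm2 (commD Y n k))).
    intros n k. rewrite commD_msub. apply Cnorm2_sub_le.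
  - rewrite zsum2_plus, !zsum2_scal. lra.
Qed.

Lemma in_g_msub_hs_le X X0 d : in_g X -> in_g X0 -> gnorm (msub X X0) < d -> hs_le (msub X X0) (2 * (d * d)).
Proof.
  intros HX HX0 Hg.
  destruct (in_g_diag_le X HX) as [DX HDX], (in_g_diag_le X0 HX0) as [DX0 HDX0].
  apply (gnorm_lt_hs_le _ (DX + DX0)); auto using msub_diag_le.
  apply msub_hilbert_schmidt; [apply HX|apply HX0].
Qed.

Lemma dnorm_msub_le X Y n k : dnorm (msub X Y) n k <= dnorm X n k + dnorm Y n k.
Proof. unfold dnorm. rewrite commD_msub. apply Cnorm1_sub. Qed.

Lemma hs_le_msub X Y a b : hs_le X a -> hs_le Y b -> hs_le (msub X Y) (2 * a + 2 * b).
Proof.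
  intros Ha Hb N. specialize (Ha N); specialize (Hb N).
  eapply Rle_trans.
  - apply (zsum2_le N _ (fun n k => 2 * (dnorm X n k * dnorm X n k) + 2 * (dnorm Y n k * dnorm Y n k))).
    intros n k. pose proof (dnorm_msub_le X Y n k). pose proof (dnorm_pos (msub X Y) n k).
    pose proof (sqr_nonneg (dnorm X n k - dnorm Y n k)).
    assert (dnorm (msub X Y) n k * dnorm (msub X Y) n k
            <= (dnorm X n k + dnorm Y n k) * (dnorm X n k + dnorm Y n k)) by (apply Rmult_le_compat; lra).
    lra.
  - rewrite zsum2_plus, !zsum2_scal. lra.
Qed.

Lemma hs_bounded_msub X Y : hs_bounded X -> hs_bounded Y -> hs_bounded (msub X Y).
Proof. intros [a Ha] [b Hb]. exists (2 * a + 2 * b). apply hs_le_msub; auto. Qed.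

Lemma msub_as_madd X Y : msub X Y = madd (mscal 1 X) (mscal (-1) Y).
Proof.
  apply functional_extensionality; intro; apply functional_extensionality; intro.
  unfold msub, madd, mscal, Csub, Cadd, Copp, Cscal; simpl; f_equal; ring.
Qed.

Lemma Csub_as_Cadd z w : Csub z w = Cadd (Cscal 1 z) (Cscal (-1) w).
Proof. unfold Csub, Cadd, Copp, Cscal; simpl; f_equal; ring. Qed.

Lemma omega_msub_l X X0 Y :
  hs_bounded X -> hs_bounded X0 -> hs_bounded Y -> omega (msub X X0) Y = Csub (omega X Y) (omega X0 Y).
Proof. intros. rewrite msub_as_madd, omega_linear_l, Csub_as_Cadd; auto. Qed.

Lemma omega_msub_r X Y Y0 :
  hs_bounded X -> hs_bounded Y -> hs_bounded Y0 -> omega X (msub Y Y0) = Csub (omega X Y) (omega X Y0).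
Proof. intros. rewrite msub_as_madd, omega_linear_r, Csub_as_Cadd; auto. Qed.

Lemma omega_sub_expand X X0 Y Y0 :
  hs_bounded X -> hs_bounded X0 -> hs_bounded Y -> hs_bounded Y0 ->
  Csub (omega X Y) (omega X0 Y0)
  = Cadd (Cadd (omega (msub X X0) (msub Y Y0)) (omega (msub X X0) Y0)) (omega X0 (msub Y Y0)).
Proof.
  intros. rewrite !omega_msub_l, !omega_msub_r; auto using hs_bounded_msub.
  destruct (omega X Y), (omega X Y0), (omega X0 Y), (omega X0 Y0).
  unfold Csub, Cadd, Copp; simpl; f_equal; ring.
Qed.

(** Balancing the AM-GM parameter as [1], [1/d] and [d] in the three terms. *)
Lemma Cnorm1_omega_sub_le X X0 Y Y0 h1 h2 d :
  0 < d <= 1 -> hs_le X0 h1 -> hs_le Y0 h2 ->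
  hs_le (msub X X0) (2 * (d * d)) -> hs_le (msub Y Y0) (2 * (d * d)) ->
  hs_bounded X -> hs_bounded Y ->
  Cnorm1 (Csub (omega X Y) (omega X0 Y0)) <= d * (4 + h1 + h2).
Proof.
  intros Hd H1 H2 EX EY HX HY.
  rewrite omega_sub_expand by (auto; (exists h1; exact H1) || (exists h2; exact H2)).
  eapply Rle_trans; [apply Cnorm1_add|].
  eapply Rle_trans; [apply Rplus_le_compat_r, Cnorm1_add|].
  pose proof (Cnorm1_omega_le _ _ _ _ 1 Rlt_0_1 EX EY) as B1.
  pose proof (Cnorm1_omega_le _ _ _ _ (/ d) (Rinv_0_lt_compat d (proj1 Hd)) EX H2) as B2.
  pose proof (Cnorm1_omega_le _ _ _ _ d (proj1 Hd) H1 EY) as B3.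
  rewrite Rinv_inv in B2. rewrite Rinv_1 in B1.
  replace (/ d * (2 * (d * d))) with (2 * d) in B2, B3 by (field; lra).
  pose proof (hs_le_nonneg _ _ H1); pose proof (hs_le_nonneg _ _ H2). nra.
Qed.

Lemma omega_continuous X0 Y0 :
  in_g X0 -> in_g Y0 -> forall eps, 0 < eps ->
  exists delta, 0 < delta /\
    forall X Y, in_g X -> in_g Y -> gnorm (msub X X0) < delta -> gnorm (msub Y Y0) < delta ->
      Cabs (Csub (omega X Y) (omega X0 Y0)) < eps.
Proof.
  intros HX0 HY0 eps Heps.
  destruct (in_g_hs_bounded X0 HX0) as [h1 H1], (in_g_hs_bounded Y0 HY0) as [h2 H2].
  pose proof (hs_le_nonneg _ _ H1); pose proof (hs_le_nonneg _ _ H2).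
  set (d := Rmin 1 (eps / (5 + h1 + h2))).
  assert (Hd : 0 < d <= 1).
  { split; [apply Rmin_glb_lt; [lra|apply Rdiv_lt_0_compat; lra]|apply Rmin_l]. }
  assert (Hdeps : d * (4 + h1 + h2) < eps).
  { assert (d <= eps / (5 + h1 + h2)) by apply Rmin_r.
    apply Rmult_le_compat_r with (r := 5 + h1 + h2) in H3; [|lra].
    unfold Rdiv in H3. rewrite Rmult_assoc, Rinv_l, Rmult_1_r in H3; nra. }
  exists d. split; [lra|]. intros X Y HX HY GX GY.
  eapply Rle_lt_trans; [apply Cabs_le_Cnorm1|]. eapply Rle_lt_trans; [|exact Hdeps].
  apply (Cnorm1_omega_sub_le X X0 Y Y0 h1 h2 d Hd H1 H2);
    auto using in_g_msub_hs_le, in_g_hs_bounded.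
Qed.

(** * Non-triviality *)

Definition two_entry (r1 c1 : Z) (z1 : Cx) (r2 c2 : Z) (z2 : Cx) : mat :=
  fun m k => if Z.eq_dec m r1 then (if Z.eq_dec k c1 then z1 else C0)
             else if Z.eq_dec m r2 then (if Z.eq_dec k c2 then z2 else C0) else C0.

Ltac two_entry_solve :=
  unfold two_entry, Copp, Cconj, C0; repeat (destruct (Z.eq_dec _ _)); subst;
  try (exfalso; lia); simpl; f_equal; ring.

Lemma csum_range_single N (f : Z -> Cx) c :
  (forall k, k <> c -> f k = C0) ->
  csum_range N f = if Z_le_dec (Z.abs c) (Z.of_nat N) then f c else C0.
Proof.
  intros Hf. unfold csum_range. rewrite !zsum_range_zsum.
  rewrite (zsum_single N _ c), (zsum_single N (fun k => snd (f k)) c) by (intros k Hk; rewrite Hf; auto).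
  destruct (Z_le_dec _ _); [destruct (f c)|]; reflexivity.
Qed.

Definition trunc_Cnorm2 N (v : Z -> Cx) c : R :=
  if Z_le_dec (Z.abs c) (Z.of_nat N) then Cnorm2 (v c) else 0.

Lemma trunc_Cnorm2_le N v c1 c2 :
  c1 <> c2 -> trunc_Cnorm2 N v c1 + trunc_Cnorm2 N v c2 <= zsum N (fun n => Cnorm2 (v n)).
Proof.
  intros Hc.
  set (g := fun k => if Z.eq_dec k c1 then Cnorm2 (v k) else if Z.eq_dec k c2 then Cnorm2 (v k) else 0).
  assert (Hg : zsum N g <= zsum N (fun n => Cnorm2 (v n))).
  { apply zsum_le. intro k. unfold g. destruct (Z.eq_dec k c1), (Z.eq_dec k c2); try lra; apply Cnorm2_pos. }
  rewrite (zsum_support2 N g c1 c2 Hc) in Hg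
    by (intros k H1 H2; unfold g; destruct (Z.eq_dec k c1), (Z.eq_dec k c2); congruence).
  unfold g, trunc_Cnorm2 in *.
  destruct (Z.eq_dec c1 c1), (Z.eq_dec c2 c1), (Z.eq_dec c2 c2); congruence || exact Hg.
Qed.

Lemma trunc_Cnorm2_nonneg N v c : 0 <= trunc_Cnorm2 N v c.
Proof. unfold trunc_Cnorm2; destruct (Z_le_dec _ _); [apply Cnorm2_pos|lra]. Qed.

Lemma two_entry_row_Cnorm2 r1 c1 z1 r2 c2 z2 N v m :
  Cnorm2 (csum_range N (fun n => Cmul (two_entry r1 c1 z1 r2 c2 z2 m n) (v n)))
  = if Z.eq_dec m r1 then Cnorm2 z1 * trunc_Cnorm2 N v c1
    else if Z.eq_dec m r2 then Cnorm2 z2 * trunc_Cnorm2 N v c2 else 0.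
Proof.
  assert (HC0 : Cnorm2 C0 = 0) by (unfold Cnorm2, C0; simpl; ring).
  assert (Hrow : forall c z, Cnorm2 (csum_range N (fun n => Cmul (if Z.eq_dec n c then z else C0) (v n)))
                             = Cnorm2 z * trunc_Cnorm2 N v c).
  { intros c z. rewrite (csum_range_single N _ c).
    - unfold trunc_Cnorm2. destruct (Z.eq_dec c c); [|congruence].
      destruct (Z_le_dec _ _); [apply Cnorm2_mul|rewrite HC0; ring].
    - intros k Hk. destruct (Z.eq_dec k c); [congruence|]. unfold Cmul, C0; simpl; f_equal; ring. }
  unfold two_entry. destruct (Z.eq_dec m r1); [apply Hrow|]. destruct (Z.eq_dec m r2); [apply Hrow|].
  rewrite (csum_range_single N _ 0%Z) by (intros; unfold Cmul, C0; simpl; f_equal; ring).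
  destruct (Z_le_dec _ _); unfold Cmul, Cnorm2, C0; simpl; ring.
Qed.

Lemma two_entry_bounded r1 c1 z1 r2 c2 z2 :
  r1 <> r2 -> c1 <> c2 -> bounded_op (two_entry r1 c1 z1 r2 c2 z2).
Proof.
  intros Hr Hc. exists (Cnorm2 z1 + Cnorm2 z2). intros N K v. rewrite !zsum_range_zsum.
  rewrite (zsum_ext K _ _ (two_entry_row_Cnorm2 r1 c1 z1 r2 c2 z2 N v)).
  eapply Rle_trans; [apply (zsum_support2_le K _ r1 r2 Hr)|].
  - intro m. destruct (Z.eq_dec m r1), (Z.eq_dec m r2); try lra;
      apply Rmult_le_pos; auto using Cnorm2_pos, trunc_Cnorm2_nonneg.
  - intros m H1 H2. destruct (Z.eq_dec m r1), (Z.eq_dec m r2); congruence.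
  - cbv beta. destruct (Z.eq_dec r1 r1), (Z.eq_dec r2 r1), (Z.eq_dec r2 r2); try congruence.
    pose proof (trunc_Cnorm2_nonneg N v c1); pose proof (trunc_Cnorm2_nonneg N v c2).
    pose proof (Cnorm2_pos z1); pose proof (Cnorm2_pos z2).
    apply Rle_trans with ((Cnorm2 z1 + Cnorm2 z2) * (trunc_Cnorm2 N v c1 + trunc_Cnorm2 N v c2)); [nra|].
    apply Rmult_le_compat_l; [lra|]. apply trunc_Cnorm2_le; auto.
Qed.

Lemma two_entry_hilbert_schmidt r1 c1 z1 r2 c2 z2 :
  r1 <> r2 -> hilbert_schmidt (commD (two_entry r1 c1 z1 r2 c2 z2)).
Proof.
  intros Hr. set (T := two_entry r1 c1 z1 r2 c2 z2).
  exists (Cnorm2 (commD T r1 c1) + Cnorm2 (commD T r2 c2)). intro N. rewrite hs_partial_zsum2. unfold zsum2.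
  assert (Hzero : forall m n, (m <> r1 /\ m <> r2) \/ (m = r1 /\ n <> c1) \/ (m = r2 /\ n <> c2) ->
                              Cnorm2 (commD T m n) = 0).
  { intros m n Hmn. unfold T, two_entry, commD, Cnorm2, Cscal.
    destruct (Z.eq_dec m r1), (Z.eq_dec m r2), (Z.eq_dec n c1), (Z.eq_dec n c2); subst;
      try (exfalso; lia); unfold C0; simpl; ring. }
  eapply Rle_trans; [apply (zsum_support2_le N _ r1 r2 Hr)|].
  - intro; apply zsum_nonneg; intro; apply Cnorm2_pos.
  - intros k H1 H2. rewrite (zsum_ext N _ (fun _ => 0)); [apply zsum_zero|]. intro; apply Hzero; auto.
  - apply Rplus_le_compat;
      [apply (zsum_support1_le N (fun k => Cnorm2 (commD T r1 k)) c1)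
      |apply (zsum_support1_le N (fun k => Cnorm2 (commD T r2 k)) c2)];
      try (intro; apply Cnorm2_pos); intros k Hk; apply Hzero; auto.
Qed.

Lemma two_entry_in_g r1 c1 z1 r2 c2 z2 :
  r1 <> r2 -> c1 <> c2 -> skew_adjoint (two_entry r1 c1 z1 r2 c2 z2) -> in_g (two_entry r1 c1 z1 r2 c2 z2).
Proof. intros. split; [apply two_entry_bounded; auto|split; auto]. apply two_entry_hilbert_schmidt; auto. Qed.

(** For [p <> 0]: [X_p = e_0p - e_p0], [Y_p = i (e_0p + e_p0)] and [P c p = i c (e_00 - e_pp)]. *)
Definition Xmat (p : Z) : mat := two_entry 0 p (1, 0) p 0 (-1, 0).
Definition Ymat (p : Z) : mat := two_entry 0 p (0, 1) p 0 (0, 1).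
Definition Pmat (c : R) (p : Z) : mat := two_entry 0 0 (0, c) p p (0, - c).

Lemma Xmat_in_g p : p <> 0%Z -> in_g (Xmat p).
Proof. intros Hp. apply two_entry_in_g; auto. intros m n. two_entry_solve. Qed.

Lemma Ymat_in_g p : p <> 0%Z -> in_g (Ymat p).
Proof. intros Hp. apply two_entry_in_g; auto. intros m n. two_entry_solve. Qed.

Lemma Pmat_in_g c p : p <> 0%Z -> in_g (Pmat c p).
Proof. intros Hp. apply two_entry_in_g; auto. intros m n. two_entry_solve. Qed.

Lemma mmul_single_column (A B : mat) m n q :
  (forall k, k <> q -> A m k = C0) -> mmul A B m n = Cmul (A m q) (B q n).
Proof.
  intros HA. apply (csum_single (fun k => Cmul (A m k) (B k n)) q).
  intros k Hk. rewrite HA; auto. unfold Cmul, C0; simpl; f_equal; ring.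
Qed.

Definition partner (p m : Z) : Z := if Z.eq_dec m 0 then p else 0.

Lemma Xmat_row p m k : p <> 0%Z -> k <> partner p m -> Xmat p m k = C0.
Proof. intros Hp Hk. unfold Xmat, two_entry, partner in *. repeat destruct (Z.eq_dec _ _); subst; lia || auto. Qed.

Lemma Ymat_row p m k : p <> 0%Z -> k <> partner p m -> Ymat p m k = C0.
Proof. intros Hp Hk. unfold Ymat, two_entry, partner in *. repeat destruct (Z.eq_dec _ _); subst; lia || auto. Qed.

Lemma bracket_Xmat_Ymat p : p <> 0%Z -> bracket (Xmat p) (Ymat p) = Pmat 2 p.
Proof.
  intros Hp. apply functional_extensionality; intro m; apply functional_extensionality; intro n.
  unfold bracket, msub.
  rewrite !(mmul_single_column _ _ m n (partner p m)) by (intros; apply Xmat_row || apply Ymat_row; auto).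
  unfold Xmat, Ymat, Pmat, partner, Cmul, Csub, Cadd. two_entry_solve.
Qed.

Lemma omega_Xmat_Ymat p : p <> 0%Z -> omega (Xmat p) (Ymat p) = (0, 2 * IZR p).
Proof.
  intros Hp. unfold omega, tr_c.
  rewrite (csum_support2 _ 0 p) by
    (auto; intros k H1 H2;
     rewrite (mmul_single_column _ _ k k (partner p k)) by (intros; apply Xmat_row; auto);
     unfold Xmat, two_entry, partner; repeat destruct (Z.eq_dec _ _); subst; try lia;
     unfold Cmul, C0; simpl; f_equal; ring).
  rewrite (mmul_single_column _ _ 0 0 (partner p 0)), (mmul_single_column _ _ p p (partner p p))
    by (intros; apply Xmat_row; auto).
  unfold Xmat, Ymat, partner, commD, Cmul, Cadd, Cscal, two_entry, C0.
  repeat destruct (Z.eq_dec _ _); subst; try lia.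
  simpl. replace (p - 0)%Z with p by lia. rewrite ?opp_IZR. apply injective_projections; simpl; ring.
Qed.

Lemma gnorm_Pmat_le c p : 0 <= c -> p <> 0%Z -> gnorm (Pmat c p) <= c.
Proof.
  intros Hc Hp. unfold gnorm.
  assert (Hhs : forall N, hs_partial (commD (Pmat c p)) N = 0).
  { intro N. rewrite hs_partial_zsum2. unfold zsum2.
    rewrite (zsum_ext N _ (fun _ => 0)); [apply zsum_zero|]. intro m.
    rewrite (zsum_ext N _ (fun _ => 0)); [apply zsum_zero|]. intro n.
    unfold Pmat, two_entry, commD, Cscal, Cnorm2, C0.
    repeat destruct (Z.eq_dec _ _); subst; simpl; try (replace (p - p)%Z with 0%Z by lia); ring. }
  replace (lim (hs_partial (commD (Pmat c p)))) with 0.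
  2:{ symmetry. apply lim_eq. eapply Un_cv_ext; [|apply (Un_cv_const 0)]. intro; rewrite Hhs; auto. }
  rewrite sqrt_0, Rplus_0_r.
  apply lub_le; [exists (Cabs (Pmat c p 0%Z 0%Z)), 0%Z; auto|].
  intros r [n ->]. eapply Rle_trans; [apply Cabs_le_Cnorm1|].
  unfold Pmat, two_entry, Cnorm1, C0. repeat destruct (Z.eq_dec _ _); simpl;
    rewrite ?Rabs_R0, ?Rabs_Ropp, ?Rabs_pos_eq; lra.
Qed.

Lemma Pmat_combination c p : madd (mscal c (Pmat 1 p)) (mscal 0 (Pmat 1 p)) = Pmat c p.
Proof.
  apply functional_extensionality; intro m; apply functional_extensionality; intro k.
  unfold Pmat, madd, mscal, Cadd, Cscal. two_entry_solve.
Qed.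

Lemma msub_Pmat_zero c p : p <> 0%Z -> msub (Pmat c p) (Pmat 0 1) = Pmat c p.
Proof.
  intros Hp. apply functional_extensionality; intro m; apply functional_extensionality; intro k.
  unfold Pmat, msub, Csub, Cadd. two_entry_solve.
Qed.

Lemma exists_pos_int_gt x : exists p : Z, (0 < p)%Z /\ x < IZR p.
Proof.
  exists (Z.max 1 (up x)). split; [lia|].
  destruct (archimed x) as [Hup _]. apply Rlt_le_trans with (IZR (up x)); auto.
  apply IZR_le; lia.
Qed.

Section Coboundary.
Variable theta : mat -> Cx.
Hypothesis theta_linear : forall (X Y : mat) (a b : R), in_g X -> in_g Y ->
  theta (madd (mscal a X) (mscal b Y)) = Cadd (Cscal a (theta X)) (Cscal b (theta Y)).
Hypothesis theta_bracket : forall X Y : mat, in_g X -> in_g Y -> omega X Y = theta (bracket X Y).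

Lemma theta_Pmat c p : p <> 0%Z -> theta (Pmat c p) = Cscal c (theta (Pmat 1 p)).
Proof.
  intros Hp. rewrite <- Pmat_combination, theta_linear by (apply Pmat_in_g; auto).
  destruct (theta (Pmat 1 p)). unfold Cadd, Cscal; simpl; f_equal; ring.
Qed.

Lemma theta_Pmat_imag p : p <> 0%Z -> snd (theta (Pmat 1 p)) = IZR p.
Proof.
  intros Hp. pose proof (omega_Xmat_Ymat p Hp) as Hom.
  rewrite theta_bracket, bracket_Xmat_Ymat, theta_Pmat in Hom by (auto using Xmat_in_g, Ymat_in_g).
  destruct (theta (Pmat 1 p)). unfold Cscal in Hom; simpl in *. injection Hom. lra.
Qed.

(** [theta (P c p)] has imaginary part [c p], while [P c p] has norm at most [c] for every [p]. *)
Lemma theta_discontinuous_at_0 :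
  ~ (forall X0 : mat, in_g X0 -> forall eps : R, 0 < eps ->
       exists delta : R, 0 < delta /\
         forall X : mat, in_g X -> gnorm (msub X X0) < delta -> Cabs (Csub (theta X) (theta X0)) < eps).
Proof.
  intros Hcont. destruct (Hcont (Pmat 0 1) (Pmat_in_g 0 1 ltac:(lia)) 1 Rlt_0_1) as [d [Hd Hc]].
  destruct (exists_pos_int_gt (2 / d)) as [p [Hp Hpd]].
  assert (Hp0 : p <> 0%Z) by lia.
  specialize (Hc (Pmat (d / 2) p) (Pmat_in_g _ _ Hp0)).
  rewrite msub_Pmat_zero in Hc by auto.
  specialize (Hc ltac:(eapply Rle_lt_trans; [apply gnorm_Pmat_le; auto; lra|lra])).
  rewrite (theta_Pmat (d / 2) p), (theta_Pmat 0 1) in Hc by lia.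
  pose proof (Rabs_snd_le_Cabs (Csub (Cscal (d / 2) (theta (Pmat 1 p))) (Cscal 0 (theta (Pmat 1 1)))))
    as Hsnd.
  replace (snd (Csub (Cscal (d / 2) (theta (Pmat 1 p))) (Cscal 0 (theta (Pmat 1 1))))) with (d / 2 * IZR p)
    in Hsnd by (rewrite <- (theta_Pmat_imag p Hp0); unfold Csub, Cadd, Copp, Cscal; simpl; ring).
  assert (1 < d / 2 * IZR p).
  { apply Rmult_lt_compat_l with (r := d / 2) in Hpd; [|lra].
    replace (d / 2 * (2 / d)) with 1 in Hpd by (field; lra). lra. }
  rewrite Rabs_pos_eq in Hsnd; lra.
Qed.

End Coboundary.

Theorem lemma2p1 :
  (forall (X Y Z : mat) (a b : R), in_g X -> in_g Y -> in_g Z ->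
     omega (madd (mscal a X) (mscal b Y)) Z
       = Cadd (Cscal a (omega X Z)) (Cscal b (omega Y Z))) /\
  (forall (X Y Z : mat) (a b : R), in_g X -> in_g Y -> in_g Z ->
     omega X (madd (mscal a Y) (mscal b Z))
       = Cadd (Cscal a (omega X Y)) (Cscal b (omega X Z))) /\
  (forall X Y : mat, in_g X -> in_g Y -> omega X Y = Copp (omega Y X)) /\
  (forall X Y Z : mat, in_g X -> in_g Y -> in_g Z ->
     Cadd (Cadd (omega X (bracket Y Z)) (omega Y (bracket Z X)))
          (omega Z (bracket X Y)) = C0) /\
  (forall X0 Y0 : mat, in_g X0 -> in_g Y0 -> forall eps : R, 0 < eps ->
     exists delta : R, 0 < delta /\
       forall X Y : mat, in_g X -> in_g Y ->
         gnorm (msub X X0) < delta -> gnorm (msub Y Y0) < delta ->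
         Cabs (Csub (omega X Y) (omega X0 Y0)) < eps) /\
  ~ (exists theta : mat -> Cx,
       (forall (X Y : mat) (a b : R), in_g X -> in_g Y ->
          theta (madd (mscal a X) (mscal b Y))
            = Cadd (Cscal a (theta X)) (Cscal b (theta Y))) /\
       (forall X0 : mat, in_g X0 -> forall eps : R, 0 < eps ->
          exists delta : R, 0 < delta /\
            forall X : mat, in_g X -> gnorm (msub X X0) < delta ->
              Cabs (Csub (theta X) (theta X0)) < eps) /\
       (forall X Y : mat, in_g X -> in_g Y -> omega X Y = theta (bracket X Y))).
Proof.
  split; [intros; apply omega_linear_l; auto using in_g_hs_bounded|].
  split; [intros; apply omega_linear_r; auto using in_g_hs_bounded|].
  split; [intros; apply omega_skew; auto using in_g_hs_bounded|].
  split; [exact omega_cocycle|].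
  split; [exact omega_continuous|].
  intros (theta & Hlin & Hcont & Hbr). exact (theta_discontinuous_at_0 theta Hlin Hbr Hcont).
Qed.
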